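(* Let $s>1/2$. For $\tau\in\mathbb{R}$ let $\mathcal H_1(\tau)$ be the linear operator on $2\pi$-periodic functions defined by $\mathcal H_1(\tau)e_n=e^{-in^3\tau}e_n$, $n\in\mathbb Z$, and for $w\in H^s$ set $$F(\tau,w):=\mathcal H_1(-\tau)\big(\mathcal H_1(\tau)w\cdot|\mathcal H_1(\tau)w|^2\big).$$ Then for every fixed $\tau$ the map $w\mapsto F(\tau,w)$ is a bounded smooth map from $H^s$ to itself with $$\|F(\tau,w)\|_{H^s}\le C_s\|w\|_{H^s}^3,$$ where $C_s$ does not depend on $\tau$. Moreover, $F$ is $2\pi$-periodic in $\tau$ and its time average $\frac1{2\pi}\int_0^{2\pi}F(\tau,w)\,d\tau=:N(w)$ is given by $$N(w)=2w\|w\|_{H}^2+\bar w\, [w,w]-2 w_0|w_0|^2e_0-\sum_{n\ne0}w_n(|w_n|^2+2|w_{-n}|^2)e_n,$$ equivalently $$N(w)=\Big(2w_0(\|w\|^2_H-|w_0|^2)+\bar w_0[w,w]\Big)e_0+\sum_{n\ne0}\Big(w_n(2\|w\|^2_H-|w_n|^2-2|w_{-n}|^2)+\bar w_{-n}[w,w]\Big)e_n.$$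
   Context: $e_n(x)=e^{inx}$, $n\in\mathbb Z$. $H=L^2_{per}(-\pi,\pi)$ is the space of complex-valued $2\pi$-periodic square-integrable functions; every $v$ is written $v=\sum_{n\in\mathbb Z}v_ne_n$, with $\|v\|_H^2=\sum_n|v_n|^2$ and $\|v\|_{H^s}^2=\sum_n(|n|^2+1)^s|v_n|^2$ ($H^s$ the periodic Sobolev space). For $w=\sum w_ne_n$, $v=\sum v_ne_n$, $[w,v]:=\sum_{n\in\mathbb Z}w_nv_{-n}$, and $\bar w$ is the complex conjugate function, $\bar w=\sum_n \bar w_{-n}e_n$. *)

(* Periodic functions are represented by their
   Fourier coefficient sequences Z -> C  (v = sum_n v n e_n). *)
From Stdlib Require Import Reals Lra Lia ZArith List.
From Coquelicot Require Import Coquelicot.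
Open Scope R_scope.

Definition seqZ := Z -> C.

Definition abs_summableZ (a : seqZ) : Prop :=
  ex_series (fun k : nat => Cmod (a (Z.of_nat k)) + Cmod (a (- Z.of_nat k - 1)%Z)).
Definition sumZ (a : seqZ) : C :=
  (Series (fun k : nat => Re (a (Z.of_nat k)) + Re (a (- Z.of_nat k - 1)%Z)),
   Series (fun k : nat => Im (a (Z.of_nat k)) + Im (a (- Z.of_nat k - 1)%Z))).

Definition weight (s : R) (n : Z) : R := Rpower (IZR n ^ 2 + 1) s.

Definition hs_terms (s : R) (v : seqZ) (k : nat) : R :=
  weight s (Z.of_nat k) * Cmod (v (Z.of_nat k)) ^ 2
  + weight s (- Z.of_nat k - 1)%Z * Cmod (v (- Z.of_nat k - 1)%Z) ^ 2.

Definition in_Hs (s : R) (v : seqZ) : Prop := ex_series (hs_terms s v).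
Definition hs_norm (s : R) (v : seqZ) : R := sqrt (Series (hs_terms s v)).
Definition h_norm (v : seqZ) : R := hs_norm 0 v.

Definition szero : seqZ := fun _ => 0%C.
Definition sadd (u v : seqZ) : seqZ := fun n => (u n + v n)%C.
Definition ssub (u v : seqZ) : seqZ := fun n => (u n - v n)%C.
Definition sscal (a : R) (u : seqZ) : seqZ := fun n => (RtoC a * u n)%C.

Definition e_ (m : Z) : seqZ := fun n => if Z.eqb n m then 1%C else 0%C.

(* product of functions = convolution of Fourier coefficients *)
Definition conv (u v : seqZ) : seqZ := fun n => sumZ (fun m => (u m * v (n - m)%Z)%C).
(* complex conjugate function: bar w = sum_n conj(w_{-n}) e_n *)
Definition sconj (w : seqZ) : seqZ := fun n => Cconj (w (- n)%Z).
Definition bracket (w v : seqZ) : C := sumZ (fun n => (w n * v (- n)%Z)%C).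

Definition H1 (tau : R) (v : seqZ) : seqZ :=
  fun n => (((cos (IZR (n ^ 3) * tau))%R, (- sin (IZR (n ^ 3) * tau))%R) * v n)%C.

(* F(tau,w) = H_1(-tau) ( H_1(tau)w * |H_1(tau)w|^2 ),  |u|^2 = u * bar u *)
Definition Fnl (tau : R) (w : seqZ) : seqZ :=
  let u := H1 tau w in H1 (- tau) (conv (conv u u) (sconj u)).

Definition Nav (w : seqZ) : seqZ :=
  fun n =>
    (RtoC 2 * w n * RtoC (h_norm w ^ 2) + sconj w n * bracket w w
     - (if Z.eqb n 0 then RtoC 2 * w 0%Z * RtoC (Cmod (w 0%Z) ^ 2)
        else w n * RtoC (Cmod (w n) ^ 2 + 2 * Cmod (w (- n)%Z) ^ 2)))%C.

Definition Nav' (w : seqZ) : seqZ :=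
  fun n =>
    if Z.eqb n 0 then
      (RtoC 2 * w 0%Z * RtoC (h_norm w ^ 2 - Cmod (w 0%Z) ^ 2)
       + Cconj (w 0%Z) * bracket w w)%C
    else
      (w n * RtoC (2 * h_norm w ^ 2 - Cmod (w n) ^ 2 - 2 * Cmod (w (- n)%Z) ^ 2)
       + Cconj (w (- n)%Z) * bracket w w)%C.

Definition upd (hs : nat -> seqZ) (i : nat) (u : seqZ) : nat -> seqZ :=
  fun j => if Nat.eqb j i then u else hs j.

Definition prod_norms (s : R) (k : nat) (hs : nat -> seqZ) : R :=
  fold_right Rmult 1 (map (fun i => hs_norm s (hs i)) (seq 0 k)).

Definition bounded_multilinear (s : R) (k : nat) (L : (nat -> seqZ) -> seqZ) : Prop :=
  (forall hs, (forall i, (i < k)%nat -> in_Hs s (hs i)) -> in_Hs s (L hs)) /\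
  (forall hs hs', (forall i, (i < k)%nat -> hs i = hs' i) -> L hs = L hs') /\
  (forall hs i (a b : R) u v, (i < k)%nat ->
     (forall j, (j < k)%nat -> in_Hs s (hs j)) -> in_Hs s u -> in_Hs s v ->
     L (upd hs i (sadd (sscal a u) (sscal b v)))
     = sadd (sscal a (L (upd hs i u))) (sscal b (L (upd hs i v)))) /\
  (exists M, forall hs, (forall i, (i < k)%nat -> in_Hs s (hs i)) ->
     hs_norm s (L hs) <= M * prod_norms s k hs).

Definition shift_in (h : seqZ) (hs : nat -> seqZ) : nat -> seqZ :=
  fun j => match j with O => h | S j' => hs j' end.

(* f : H^s -> H^s is C^infinity: there are D k w (the k-th Frechet derivative at w,
   a bounded k-linear map), D 0 w = f w, and each w |-> D k w is Frechet
   differentiable (in operator norm) with derivative h |-> D (k+1) w (h, .). *)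
Definition smooth_Hs (s : R) (f : seqZ -> seqZ) : Prop :=
  exists D : nat -> seqZ -> (nat -> seqZ) -> seqZ,
    (forall w hs, in_Hs s w -> D 0%nat w hs = f w) /\
    (forall k w, in_Hs s w -> bounded_multilinear s k (D k w)) /\
    (forall k w, in_Hs s w -> forall eps, 0 < eps -> exists delta, 0 < delta /\
       forall h, in_Hs s h -> hs_norm s h < delta ->
       forall hs, (forall i, (i < k)%nat -> in_Hs s (hs i) /\ hs_norm s (hs i) <= 1) ->
       hs_norm s (ssub (D k (sadd w h) hs)
                       (sadd (D k w hs) (D (S k) w (shift_in h hs))))
       <= eps * hs_norm s h).

(** The cubic term is [F(tau, w) = T_tau(w, w, w)] for the trilinear map
    [T_tau(a, b, c) = H_1(-tau)(H_1(tau)a * H_1(tau)b * conj(H_1(tau)c))].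
    Since [H_1(tau)] and conjugation are isometries of [H^s] and [H^s] is a
    Banach algebra for [s > 1/2] (the weight is submultiplicative up to
    [4^s], and [sum 1/weight < oo] gives the [l^1] embedding), [T_tau] is
    bounded uniformly in [tau]; a bounded trilinear map is smooth with
    derivatives given by symmetrised partial evaluations, vanishing from
    order 4 on.  Coefficientwise, [F(tau, w)_n] is a double sum over
    [k = n1 + n2] and [a = n1] of [e^{i theta tau} w_a w_{k-a} conj(w_{k-n})]
    with [theta = 3 k (a - n) (k - a - n)]; by dominated convergence the
    average over a period keeps exactly the resonant terms [theta = 0], i.e.
    [k = 0], [a = n] or [a = k - n], whose sum is [N(w)_n]. *)

From Stdlib Require Import Reals ZArith Lra Lia Psatz List FinFun FunctionalExtensionality.
From Coquelicot Require Import Coquelicot.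
Open Scope R_scope.

(** * Absolutely convergent real series over Z *)

Definition zfold (a : Z -> R) (k : nat) : R := a (Z.of_nat k) + a (- Z.of_nat k - 1)%Z.
Definition zsummable (a : Z -> R) : Prop := ex_series (zfold a).
Definition zsum (a : Z -> R) : R := Series (zfold a).

Fixpoint window (N : nat) : list Z :=
  match N with O => nil | S N' => Z.of_nat N' :: (- Z.of_nat N' - 1)%Z :: window N' end.

Fixpoint lsum (a : Z -> R) (l : list Z) : R :=
  match l with nil => 0 | x :: l' => a x + lsum a l' end.

Lemma lsum_app a l1 l2 : lsum a (l1 ++ l2) = lsum a l1 + lsum a l2.
Proof. induction l1; simpl; [ring| rewrite IHl1; ring]. Qed.

Lemma lsum_ext a b l : (forall x, In x l -> a x = b x) -> lsum a l = lsum b l.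
Proof. induction l; simpl; intros H; [auto| rewrite H, IHl; auto]. Qed.

Lemma lsum_scal c a l : lsum (fun x => c * a x) l = c * lsum a l.
Proof. induction l; simpl; [ring| rewrite IHl; ring]. Qed.

Lemma lsum_le a b l : (forall x, a x <= b x) -> lsum a l <= lsum b l.
Proof. induction l; simpl; intros H; [lra| specialize (IHl H); specialize (H a0); lra]. Qed.

Lemma lsum_nonneg a l : (forall x, 0 <= a x) -> 0 <= lsum a l.
Proof. induction l; simpl; intros H; [lra| specialize (IHl H); specialize (H a0); lra]. Qed.

Lemma lsum_map a f l : lsum a (map f l) = lsum (fun x => a (f x)) l.
Proof. induction l; simpl; [auto| rewrite IHl; auto]. Qed.

Lemma plus_Rplus (x y : R) : plus x y = x + y.
Proof. reflexivity. Qed.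

Lemma lsum_window a N : lsum a (window (S N)) = sum_n (zfold a) N.
Proof.
  induction N.
  - rewrite sum_O. cbn [window lsum]. unfold zfold. ring.
  - rewrite sum_Sn, <- IHN, plus_Rplus. cbn [window lsum]. unfold zfold. ring.
Qed.

Lemma in_window N x : In x (window N) <-> (- Z.of_nat N <= x < Z.of_nat N)%Z.
Proof. induction N; simpl; [lia| rewrite IHN; lia]. Qed.

Lemma NoDup_window N : NoDup (window N).
Proof.
  induction N; simpl; constructor.
  - simpl. intros [H|H]; [lia|]. apply in_window in H. lia.
  - constructor; auto. intros H; apply in_window in H; lia.
Qed.

Lemma window_cover (l : list Z) : exists N, forall x, In x l -> In x (window N).
Proof.
  induction l as [|x l [N HN]].
  - exists O; simpl; tauto.
  - exists (Nat.max N (S (Z.to_nat (Z.abs x)))). intros y [<-|Hy].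
    + apply in_window. lia.
    + apply HN, in_window in Hy. apply in_window. lia.
Qed.

Lemma lsum_incl_le a l w : (forall x, 0 <= a x) -> NoDup l -> NoDup w ->
  (forall x, In x l -> In x w) -> lsum a l <= lsum a w.
Proof.
  intros Ha. revert w. induction l as [|x l IH]; intros w Hl Hw Hinc; simpl.
  - apply lsum_nonneg; auto.
  - assert (Hx : In x w) by (apply Hinc; left; auto).
    destruct (in_split _ _ Hx) as [w1 [w2 ->]].
    rewrite lsum_app. simpl. inversion Hl; subst.
    assert (Hrest : lsum a l <= lsum a (w1 ++ w2)).
    { apply IH; auto. eapply NoDup_remove_1; eauto.
      intros y Hy. assert (Hyw : In y (w1 ++ x :: w2)) by (apply Hinc; right; auto).
      apply in_app_or in Hyw. apply in_or_app. destruct Hyw as [?|[?|?]]; auto.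
      subst; contradiction. }
    rewrite lsum_app in Hrest. lra.
Qed.

Lemma zfold_nonneg a k : (forall x, 0 <= a x) -> 0 <= zfold a k.
Proof. intros H; unfold zfold; pose proof (H (Z.of_nat k)); pose proof (H (- Z.of_nat k - 1)%Z); lra. Qed.

Lemma sum_n_le_Series a N : (forall k, 0 <= a k) -> ex_series a -> sum_n a N <= Series a.
Proof.
  intros Ha He. apply (is_lim_seq_incr_compare (sum_n a)).
  - exact (Series_correct _ He).
  - intros n. rewrite sum_Sn, plus_Rplus. specialize (Ha (S n)). lra.
Qed.

Lemma Series_zero : Series (fun _ => 0) = 0.
Proof.
  rewrite (Series_ext (fun _ => 0) (fun n => 0 * 1)) by (intros; ring).
  rewrite Series_scal_l. ring.
Qed.

Lemma zsum_nonneg a : (forall x, 0 <= a x) -> zsummable a -> 0 <= zsum a.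
Proof.
  intros H Hok. unfold zsum. rewrite <- Series_zero. apply Series_le; auto.
  intros; split; [lra| apply zfold_nonneg; auto].
Qed.

Lemma lsum_le_zsum a l : (forall x, 0 <= a x) -> zsummable a -> NoDup l -> lsum a l <= zsum a.
Proof.
  intros Ha Hok Hl. destruct (window_cover l) as [N HN].
  apply Rle_trans with (lsum a (window (S N))).
  - apply lsum_incl_le; auto. apply NoDup_window.
    intros x Hx. apply HN, in_window in Hx. apply in_window. lia.
  - rewrite lsum_window. apply sum_n_le_Series; auto. intros; apply zfold_nonneg; auto.
Qed.

Lemma le_zsum a n : (forall x, 0 <= a x) -> zsummable a -> a n <= zsum a.
Proof.
  intros Ha Hok. pose proof (lsum_le_zsum a (n :: nil) Ha Hok ltac:(repeat constructor; auto)).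
  simpl in H; lra.
Qed.

Lemma zsummable_window_bound a B : (forall x, 0 <= a x) -> (forall N, lsum a (window N) <= B) ->
  zsummable a /\ zsum a <= B.
Proof.
  intros Ha HB.
  assert (Hinc : forall n, sum_n (zfold a) n <= sum_n (zfold a) (S n)).
  { intros n. rewrite sum_Sn, plus_Rplus. pose proof (zfold_nonneg a (S n) Ha). lra. }
  assert (Hb : forall n, sum_n (zfold a) n <= B) by (intros n; rewrite <- lsum_window; auto).
  destruct (ex_finite_lim_seq_incr _ B Hinc Hb) as [l Hl].
  assert (Hs : is_series (zfold a) l) by exact Hl.
  split; [exists l; auto|].
  unfold zsum. rewrite (is_series_unique _ _ Hs).
  apply (is_lim_seq_le (sum_n (zfold a)) (fun _ => B) l B); auto. apply is_lim_seq_const.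
Qed.

Lemma zsummable_lsum_bound a B : (forall x, 0 <= a x) -> (forall l, NoDup l -> lsum a l <= B) ->
  zsummable a /\ zsum a <= B.
Proof. intros Ha HB. apply zsummable_window_bound; auto. intros; apply HB, NoDup_window. Qed.

Lemma zsummable_le a b : (forall x, 0 <= a x <= b x) -> zsummable b ->
  zsummable a /\ zsum a <= zsum b.
Proof.
  intros H Hb. apply zsummable_lsum_bound. intros x; apply H.
  intros l Hl. apply Rle_trans with (lsum b l). apply lsum_le; intros; apply H.
  apply lsum_le_zsum; auto. intros x; pose proof (H x); lra.
Qed.

Lemma zsummable_reindex a (f : Z -> Z) : (forall x, 0 <= a x) -> zsummable a ->
  (forall x y, f x = f y -> x = y) ->
  zsummable (fun x => a (f x)) /\ zsum (fun x => a (f x)) <= zsum a.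
Proof.
  intros Ha Hok Hf. apply zsummable_lsum_bound. intros; apply Ha.
  intros l Hl. rewrite <- lsum_map. apply lsum_le_zsum; auto.
  apply Injective_map_NoDup; auto.
Qed.

Lemma zsum_reindex_bij a (f g : Z -> Z) : (forall x, 0 <= a x) -> zsummable a ->
  (forall x, f (g x) = x) -> (forall x, g (f x) = x) ->
  zsummable (fun x => a (f x)) /\ zsum (fun x => a (f x)) = zsum a.
Proof.
  intros Ha Hok Hfg Hgf.
  assert (Hf : forall x y, f x = f y -> x = y).
  { intros x y E. rewrite <- (Hgf x), <- (Hgf y), E; auto. }
  assert (Hg : forall x y, g x = g y -> x = y).
  { intros x y E. rewrite <- (Hfg x), <- (Hfg y), E; auto. }
  destruct (zsummable_reindex a f Ha Hok Hf) as [Hok' Hle].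
  destruct (zsummable_reindex (fun x => a (f x)) g (fun x => Ha _) Hok' Hg) as [_ Hle'].
  split; auto. apply Rle_antisym; auto.
  eapply Rle_trans; [|apply Hle']. right. unfold zsum, zfold. apply Series_ext; intros. rewrite !Hfg; auto.
Qed.

Lemma zsummable_ext a b : (forall x, a x = b x) -> zsummable a -> zsummable b.
Proof. intros H Ha. unfold zsummable. eapply ex_series_ext; [|exact Ha]. intros; unfold zfold; rewrite !H; auto. Qed.

Lemma zsum_ext a b : (forall x, a x = b x) -> zsum a = zsum b.
Proof. intros H. unfold zsum. apply Series_ext; intros; unfold zfold; rewrite !H; auto. Qed.

Lemma zsummable_plus a b : zsummable a -> zsummable b -> zsummable (fun x => a x + b x).
Proof.
  intros Ha Hb. unfold zsummable. eapply ex_series_ext; [|apply (ex_series_plus _ _ Ha Hb)].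
  intros n; unfold zfold; simpl; rewrite plus_Rplus; ring.
Qed.

Lemma zsum_plus a b : zsummable a -> zsummable b -> zsum (fun x => a x + b x) = zsum a + zsum b.
Proof.
  intros Ha Hb. unfold zsum. rewrite (Series_ext _ (fun n => zfold a n + zfold b n)).
  - apply Series_plus; auto.
  - intros; unfold zfold; ring.
Qed.

Lemma zsummable_scal c a : zsummable a -> zsummable (fun x => c * a x).
Proof.
  intros Ha. unfold zsummable.
  eapply ex_series_ext; [|apply (@ex_series_scal_l R_AbsRing R_NormedModule c (zfold a) Ha)].
  intros n. unfold zfold, scal; simpl; unfold mult; simpl; ring.
Qed.

Lemma zsum_scal c a : zsum (fun x => c * a x) = c * zsum a.
Proof. unfold zsum. rewrite <- Series_scal_l. apply Series_ext; intros; unfold zfold; ring. Qed.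

Lemma zsummable_minus a b : zsummable a -> zsummable b -> zsummable (fun x => a x - b x).
Proof.
  intros Ha Hb. apply zsummable_ext with (fun x => a x + (-1) * b x); [intros; ring|].
  apply zsummable_plus, zsummable_scal; auto.
Qed.

Lemma zsum_minus a b : zsummable a -> zsummable b -> zsum (fun x => a x - b x) = zsum a - zsum b.
Proof.
  intros Ha Hb. rewrite (zsum_ext _ (fun x => a x + (-1) * b x)) by (intros; ring).
  rewrite zsum_plus, zsum_scal; auto. ring. apply zsummable_scal; auto.
Qed.

Lemma zsum_le a b : zsummable a -> zsummable b -> (forall x, a x <= b x) -> zsum a <= zsum b.
Proof.
  intros Ha Hb H. assert (Hd : 0 <= zsum (fun x => b x - a x)).
  { apply zsum_nonneg. intros x; specialize (H x); lra. apply zsummable_minus; auto. }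
  rewrite zsum_minus in Hd; auto. lra.
Qed.

Lemma zsummable_abs a : zsummable (fun x => Rabs (a x)) -> zsummable a.
Proof.
  intros H. unfold zsummable. apply (ex_series_le (zfold a) (zfold (fun x => Rabs (a x)))); auto.
  intros n. unfold norm; simpl. unfold abs; simpl. unfold zfold.
  eapply Rle_trans. apply Rabs_triang. lra.
Qed.

Lemma zsummable_dom a b : (forall x, Rabs (a x) <= b x) -> zsummable b -> zsummable a.
Proof.
  intros H Hb. apply zsummable_abs. apply (zsummable_le _ b); auto.
  intros x; split; [apply Rabs_pos| auto].
Qed.

Lemma zsum_zero : zsummable (fun _ => 0) /\ zsum (fun _ => 0) = 0.
Proof.
  split.
  - apply (zsummable_ext (fun x => 0 * 0)); [intros; ring|].
    apply zsummable_lsum_bound with (B := 0); [intros; lra|].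
    intros l _; induction l; simpl; lra.
  - rewrite (zsum_ext _ (fun _ => 0 * 0)) by (intros; ring). rewrite zsum_scal; ring.
Qed.

Lemma zsum_lsum (X : Z -> Z -> R) l : (forall n, zsummable (X n)) ->
  zsummable (fun m => lsum (fun n => X n m) l) /\
  zsum (fun m => lsum (fun n => X n m) l) = lsum (fun n => zsum (X n)) l.
Proof.
  intros H. induction l as [|x l [IH1 IH2]]; simpl.
  - apply zsum_zero.
  - split. apply zsummable_plus; auto. rewrite zsum_plus, IH2; auto.
Qed.

Lemma lsum_restrict a w L : NoDup w -> NoDup L -> (forall x, In x L -> In x w) ->
  (forall y, In y w -> ~ In y L -> a y = 0) -> lsum a w = lsum a L.
Proof.
  revert L. induction w as [|x w IH]; intros L Hw HL Hinc Hz.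
  - destruct L as [|y L]; auto. exfalso; apply (Hinc y); left; auto.
  - inversion Hw; subst. simpl.
    destruct (in_dec Z.eq_dec x L) as [Hx|Hx].
    + destruct (in_split _ _ Hx) as [L1 [L2 ->]].
      rewrite lsum_app. simpl. rewrite (IH (L1 ++ L2)); auto.
      * rewrite lsum_app. ring.
      * eapply NoDup_remove_1; eauto.
      * intros y Hy. assert (Hy' : In y (L1 ++ x :: L2)).
        { apply in_app_or in Hy; apply in_or_app; simpl; tauto. }
        apply Hinc in Hy'. destruct Hy' as [<-|?]; auto.
        exfalso. apply (NoDup_remove_2 _ _ _ HL). auto.
      * intros y Hy Hn. apply Hz. right; auto. intros Hy'.
        apply in_app_or in Hy'. destruct Hy' as [?|[<-|?]]; auto;
          apply Hn; apply in_or_app; auto.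
    + rewrite (Hz x); [|left; auto| auto].
      rewrite (IH L); auto. ring.
      intros y Hy. destruct (Hinc y Hy) as [<-|?]; auto. contradiction.
      intros y Hy Hn; apply Hz; auto. right; auto.
Qed.

Lemma zsum_finite_support a L : NoDup L -> (forall y, ~ In y L -> a y = 0) ->
  zsummable a /\ zsum a = lsum a L.
Proof.
  intros HL Hz. destruct (window_cover L) as [N HN].
  assert (Hs : is_series (zfold a) (lsum a L)).
  { unfold is_series. apply (is_lim_seq_ext_loc (fun _ => lsum a L) _ (Finite (lsum a L))).
    - exists N. intros n Hn. rewrite <- lsum_window. symmetry. apply lsum_restrict; auto.
      + apply NoDup_window.
      + intros x Hx. apply HN, in_window in Hx. apply in_window. lia.
    - apply is_lim_seq_const. }
  split; [exists (lsum a L); auto| apply is_series_unique; auto].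
Qed.

Lemma cauchy_schwarz_step x0 y0 P X Y : 0 <= X -> 0 <= Y -> P ^ 2 <= X * Y ->
  (x0 * y0 + P) ^ 2 <= (x0 ^ 2 + X) * (y0 ^ 2 + Y).
Proof.
  intros HX HY HP.
  assert (2 * x0 * y0 * P <= x0 ^ 2 * Y + y0 ^ 2 * X).
  { destruct (Req_dec X 0) as [E|E].
    - subst. assert (P = 0) by (apply Rle_antisym; nra). subst. nra.
    - assert (0 <= (x0 * P - y0 * X) ^ 2) by apply pow2_ge_0.
      assert (0 <= x0 ^ 2 * (X * Y - P ^ 2)) by (apply Rmult_le_pos; [apply pow2_ge_0| lra]).
      nra. }
  nra.
Qed.

Lemma lsum_cauchy_schwarz x y l :
  (lsum (fun n => x n * y n) l) ^ 2 <= lsum (fun n => x n ^ 2) l * lsum (fun n => y n ^ 2) l.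
Proof.
  induction l as [|a l IH]; simpl; [lra|].
  apply cauchy_schwarz_step; auto; apply lsum_nonneg; intros; nra.
Qed.

Lemma le_sqrt_mult S A B : 0 <= A -> 0 <= B -> S ^ 2 <= A * B -> S <= sqrt A * sqrt B.
Proof.
  intros HA HB H. rewrite <- sqrt_mult; auto.
  destruct (Rle_dec S 0). apply Rle_trans with 0; auto. apply sqrt_pos.
  rewrite <- (sqrt_pow2 S) by lra. apply sqrt_le_1_alt. lra.
Qed.

Lemma zsum_cauchy_schwarz x y : zsummable (fun n => x n ^ 2) -> zsummable (fun n => y n ^ 2) ->
  zsummable (fun n => Rabs (x n) * Rabs (y n)) /\
  zsum (fun n => Rabs (x n) * Rabs (y n))
    <= sqrt (zsum (fun n => x n ^ 2)) * sqrt (zsum (fun n => y n ^ 2)).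
Proof.
  intros Hx Hy. apply zsummable_lsum_bound.
  - intros; apply Rmult_le_pos; apply Rabs_pos.
  - intros l Hl.
    apply Rle_trans with (sqrt (lsum (fun n => x n ^ 2) l) * sqrt (lsum (fun n => y n ^ 2) l)).
    + apply le_sqrt_mult; try (apply lsum_nonneg; intros; nra).
      rewrite (lsum_ext (fun n => x n ^ 2) (fun n => Rabs (x n) ^ 2)) by (intros; rewrite pow2_abs; auto).
      rewrite (lsum_ext (fun n => y n ^ 2) (fun n => Rabs (y n) ^ 2)) by (intros; rewrite pow2_abs; auto).
      apply lsum_cauchy_schwarz.
    + apply Rmult_le_compat; try apply sqrt_pos; apply sqrt_le_1_alt;
        apply lsum_le_zsum; auto; intros; nra.
Qed.

(** * Absolutely convergent complex series over Z *)

Definition csummable (a : Z -> C) : Prop := zsummable (fun n => Cmod (a n)).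

Lemma sumZ_components a : sumZ a = (zsum (fun n => Re (a n)), zsum (fun n => Im (a n))).
Proof. reflexivity. Qed.

Lemma im_le_Cmod c : Rabs (Im c) <= Cmod c.
Proof.
  unfold Cmod. rewrite <- (sqrt_pow2 (Rabs (Im c))) by apply Rabs_pos.
  apply sqrt_le_1_alt. rewrite pow2_abs. pose proof (pow2_ge_0 (fst c)). unfold Im. lra.
Qed.

Lemma csummable_re a : csummable a -> zsummable (fun n => Re (a n)).
Proof. exact (zsummable_dom _ _ (fun n => re_le_Cmod (a n))). Qed.

Lemma csummable_im a : csummable a -> zsummable (fun n => Im (a n)).
Proof. exact (zsummable_dom _ _ (fun n => im_le_Cmod (a n))). Qed.

Lemma csummable_dom a b : (forall n, Cmod (a n) <= b n) -> zsummable b -> csummable a.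
Proof. intros H Hb. exact (proj1 (zsummable_le _ _ (fun n => conj (Cmod_ge_0 _) (H n)) Hb)). Qed.

Lemma csummable_ext a b : (forall n, a n = b n) -> csummable a -> csummable b.
Proof. intros H. apply zsummable_ext. intros; rewrite H; auto. Qed.

Lemma sumZ_ext a b : (forall n, a n = b n) -> sumZ a = sumZ b.
Proof. intros H. rewrite !sumZ_components. f_equal; apply zsum_ext; intros; rewrite H; auto. Qed.

Lemma csummable_plus a b : csummable a -> csummable b -> csummable (fun n => (a n + b n)%C).
Proof.
  intros Ha Hb. apply csummable_dom with (fun n => Cmod (a n) + Cmod (b n)).
  - intros; apply Cmod_triangle.
  - apply zsummable_plus; auto.
Qed.

Lemma csummable_scal c a : csummable a -> csummable (fun n => (c * a n)%C).
Proof.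
  intros Ha. apply csummable_dom with (fun n => Cmod c * Cmod (a n)).
  - intros; rewrite Cmod_mult; lra.
  - apply zsummable_scal; auto.
Qed.

Lemma csummable_scal_r c a : csummable a -> csummable (fun n => (a n * c)%C).
Proof. intros Ha. apply csummable_ext with (fun n => (c * a n)%C); [intros; apply Cmult_comm|]. apply csummable_scal; auto. Qed.

Lemma sumZ_plus a b : csummable a -> csummable b -> sumZ (fun n => (a n + b n)%C) = (sumZ a + sumZ b)%C.
Proof.
  intros Ha Hb. rewrite !sumZ_components. unfold Cplus; simpl. f_equal.
  - rewrite <- zsum_plus by (apply csummable_re; auto). apply zsum_ext; reflexivity.
  - rewrite <- zsum_plus by (apply csummable_im; auto). apply zsum_ext; reflexivity.
Qed.

Lemma sumZ_scal c a : csummable a -> sumZ (fun n => (c * a n)%C) = (c * sumZ a)%C.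
Proof.
  intros Ha. rewrite !sumZ_components. destruct c as [cr ci]. unfold Cmult; simpl.
  pose proof (csummable_re a Ha). pose proof (csummable_im a Ha). f_equal.
  - rewrite (zsum_ext _ (fun n => cr * Re (a n) + (- ci) * Im (a n))) by (intros; unfold Re, Im; simpl; ring).
    rewrite zsum_plus, !zsum_scal by (apply zsummable_scal; auto). ring.
  - rewrite (zsum_ext _ (fun n => cr * Im (a n) + ci * Re (a n))) by (intros; unfold Re, Im; simpl; ring).
    rewrite zsum_plus, !zsum_scal by (apply zsummable_scal; auto). ring.
Qed.

Lemma sumZ_scal_r c a : csummable a -> sumZ (fun n => (a n * c)%C) = (sumZ a * c)%C.
Proof.
  intros Ha. rewrite (sumZ_ext _ (fun n => (c * a n)%C)) by (intros; apply Cmult_comm).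
  rewrite sumZ_scal; auto. apply Cmult_comm.
Qed.

Lemma Cmod_sumZ a : csummable a -> Cmod (sumZ a) <= zsum (fun n => Cmod (a n)).
Proof.
  intros Ha. set (S := sumZ a). set (M := zsum (fun n => Cmod (a n))).
  assert (HM : 0 <= M) by (apply zsum_nonneg; auto; intros; apply Cmod_ge_0).
  (* [|S|^2 = sum <S, a_n> <= sum |S| |a_n|], then divide by [|S|]. *)
  assert (Hsq : Cmod S ^ 2 <= Cmod S * M).
  { rewrite Cmod2_alt.
    assert (E : Re S ^ 2 + Im S ^ 2 = zsum (fun n => Re S * Re (a n) + Im S * Im (a n))).
    { rewrite zsum_plus, !zsum_scal
        by (apply zsummable_scal; first [apply csummable_re | apply csummable_im]; auto).
      change (zsum (fun n => Re (a n))) with (Re S). change (zsum (fun n => Im (a n))) with (Im S).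
      ring. }
    rewrite E. unfold M. rewrite <- zsum_scal. apply zsum_le.
    - apply zsummable_plus; apply zsummable_scal; [apply csummable_re|apply csummable_im]; auto.
    - apply zsummable_scal; auto.
    - intros n. unfold Cmod, Re, Im. generalize (fst S) (snd S). intros u v.
      destruct (a n) as [x y]. cbn [fst snd]. clear E.
      pose proof (pow2_ge_0 (u * y - v * x)).
      apply le_sqrt_mult; nra. }
  pose proof (Cmod_ge_0 S).
  destruct (Req_dec (Cmod S) 0) as [E|E]; [lra|].
  apply Rmult_le_reg_l with (Cmod S); nra.
Qed.

Lemma sumZ_finite_support (a : Z -> C) L : NoDup L -> (forall y, ~ In y L -> a y = 0%C) ->
  csummable a /\ sumZ a = (lsum (fun n => Re (a n)) L, lsum (fun n => Im (a n)) L).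
Proof.
  intros HL Hz.
  assert (Hsupp : forall f : C -> R, f 0%C = 0 -> forall y, ~ In y L -> f (a y) = 0).
  { intros f Hf y Hy. rewrite Hz; auto. }
  split.
  - exact (proj1 (zsum_finite_support _ L HL (Hsupp Cmod Cmod_0))).
  - rewrite sumZ_components.
    rewrite (proj2 (zsum_finite_support _ L HL (Hsupp Re eq_refl))).
    rewrite (proj2 (zsum_finite_support _ L HL (Hsupp Im eq_refl))). reflexivity.
Qed.

Lemma sumZ_single (a : Z -> C) p : (forall y, y <> p -> a y = 0%C) -> csummable a /\ sumZ a = a p.
Proof.
  intros H. destruct (sumZ_finite_support a (p :: nil)) as [Ha ->].
  - repeat constructor; auto.
  - intros y Hy. apply H. intros ->. apply Hy. left; auto.
  - split; auto. apply injective_projections; simpl; unfold Re, Im; ring.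
Qed.

Lemma sumZ_pair (a : Z -> C) p q : p <> q -> (forall y, y <> p -> y <> q -> a y = 0%C) ->
  csummable a /\ sumZ a = (a p + a q)%C.
Proof.
  intros Hpq H. destruct (sumZ_finite_support a (p :: q :: nil)) as [Ha ->].
  - constructor; [simpl; intros [E|[]]; auto|]. repeat constructor; auto.
  - intros y Hy. apply H; intros ->; apply Hy; simpl; auto.
  - split; auto. apply injective_projections; simpl; unfold Re, Im; ring.
Qed.

Lemma sumZ_RtoC r : zsummable r -> sumZ (fun n => RtoC (r n)) = RtoC (zsum r).
Proof. intros H. rewrite sumZ_components. unfold RtoC. f_equal. apply zsum_zero. Qed.

Lemma csummable_RtoC r : zsummable (fun n => Rabs (r n)) -> csummable (fun n => RtoC (r n)).
Proof. intros H. unfold csummable. eapply zsummable_ext; [|exact H]. intros; rewrite Cmod_R; auto. Qed.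

(** * Young's inequality [l^1 * l^2 -> l^2] *)

Section Young.
Variables f g : Z -> R.
Hypothesis f_nonneg : forall x, 0 <= f x.
Hypothesis g_nonneg : forall x, 0 <= g x.
Hypothesis f_summable : zsummable f.
Hypothesis g_sq_summable : zsummable (fun x => g x ^ 2).

Definition zconv (n : Z) : R := zsum (fun m => f m * g (n - m)).

Lemma zsummable_mul_shift_sq n : zsummable (fun m => f m * g (n - m) ^ 2).
Proof.
  assert (H : forall m, 0 <= f m * g (n - m) ^ 2 <= zsum (fun x => g x ^ 2) * f m).
  { intros m. split; [apply Rmult_le_pos; auto; apply pow2_ge_0|].
    pose proof (le_zsum (fun x => g x ^ 2) (n - m) (fun x => pow2_ge_0 _) g_sq_summable).
    pose proof (f_nonneg m). cbv beta in H. nra. }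
  exact (proj1 (zsummable_le _ _ H (zsummable_scal _ _ f_summable))).
Qed.

(* Cauchy-Schwarz with the weights [f]. *)
Lemma zconv_sq_le n : zsummable (fun m => f m * g (n - m)) /\
  zconv n ^ 2 <= zsum f * zsum (fun m => f m * g (n - m) ^ 2).
Proof.
  set (x := fun m => sqrt (f m)). set (y := fun m => sqrt (f m) * g (n - m)).
  assert (Ex : forall m, x m ^ 2 = f m) by (intros; unfold x; rewrite pow2_sqrt; auto).
  assert (Ey : forall m, y m ^ 2 = f m * g (n - m) ^ 2)
    by (intros; unfold y; rewrite Rpow_mult_distr, pow2_sqrt; auto).
  assert (Exy : forall m, Rabs (x m) * Rabs (y m) = f m * g (n - m)).
  { intros m; unfold x, y. rewrite !Rabs_pos_eq, <- Rmult_assoc, sqrt_sqrt; auto.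
    all: try apply Rmult_le_pos; auto; apply sqrt_pos. }
  destruct (zsum_cauchy_schwarz x y) as [H1 H2].
  - apply zsummable_ext with f; [intros m; rewrite Ex; auto| auto].
  - apply zsummable_ext with (fun m => f m * g (n - m) ^ 2);
      [intros m; rewrite Ey; auto| apply zsummable_mul_shift_sq].
  - split; [apply zsummable_ext with (fun m => Rabs (x m) * Rabs (y m)); auto|].
    unfold zconv. rewrite (zsum_ext _ (fun m => Rabs (x m) * Rabs (y m))) by (intros; rewrite Exy; auto).
    rewrite (zsum_ext (fun m => x m ^ 2) f),
      (zsum_ext (fun m => y m ^ 2) (fun m => f m * g (n - m) ^ 2)) in H2 by auto.
    assert (0 <= zsum (fun m => Rabs (x m) * Rabs (y m))).
    { apply zsum_nonneg; auto. intros; apply Rmult_le_pos; apply Rabs_pos. }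
    apply Rle_trans with ((sqrt (zsum f) * sqrt (zsum (fun m => f m * g (n - m) ^ 2))) ^ 2).
    + apply pow_incr; lra.
    + rewrite Rpow_mult_distr, !pow2_sqrt; [lra| |].
      * apply zsum_nonneg; [intros; apply Rmult_le_pos; auto; apply pow2_ge_0| apply zsummable_mul_shift_sq].
      * apply zsum_nonneg; auto.
Qed.

Lemma young_l1_l2 : zsummable (fun n => zconv n ^ 2) /\
  zsum (fun n => zconv n ^ 2) <= zsum f ^ 2 * zsum (fun x => g x ^ 2).
Proof.
  apply zsummable_lsum_bound; [intros; apply pow2_ge_0|].
  intros l Hl.
  assert (Hf0 : 0 <= zsum f) by (apply zsum_nonneg; auto).
  apply Rle_trans with (zsum f * lsum (fun n => zsum (fun m => f m * g (n - m) ^ 2)) l).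
  { rewrite <- lsum_scal. apply lsum_le. intros n. apply (zconv_sq_le n). }
  replace (zsum f ^ 2 * zsum (fun x => g x ^ 2)) with (zsum f * (zsum (fun x => g x ^ 2) * zsum f)) by ring.
  apply Rmult_le_compat_l; auto.
  destruct (zsum_lsum (fun n m => f m * g (n - m) ^ 2) l zsummable_mul_shift_sq) as [Hok HE].
  rewrite <- HE, (zsum_ext _ (fun m => f m * lsum (fun n => g (n - m) ^ 2) l))
    by (intros m; rewrite <- lsum_scal; auto).
  rewrite <- zsum_scal. apply zsum_le.
  - apply zsummable_ext with (fun m => lsum (fun n => f m * g (n - m) ^ 2) l); auto.
    intros m; rewrite <- lsum_scal; auto.
  - apply zsummable_scal; auto.
  - intros m. rewrite (Rmult_comm (zsum _)). apply Rmult_le_compat_l; auto.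
    rewrite <- (lsum_map (fun x => g x ^ 2) (fun n => (n - m)%Z)).
    apply lsum_le_zsum; auto; [intros; apply pow2_ge_0|].
    apply Injective_map_NoDup; auto. intros a b E; lia.
Qed.

End Young.

Definition cis (x : R) : C := (cos x, sin x).

Lemma cis_mult x y : (cis x * cis y)%C = cis (x + y).
Proof. unfold cis. apply injective_projections; simpl; rewrite ?cos_plus, ?sin_plus; ring. Qed.

Lemma Cmod_cis x : Cmod (cis x) = 1.
Proof.
  unfold Cmod, cis. simpl. pose proof (sin2_cos2 x). unfold Rsqr in H.
  replace (cos x * (cos x * 1) + sin x * (sin x * 1)) with 1 by nra. apply sqrt_1.
Qed.

Lemma Cconj_cis_mult x z : Cconj (cis x * z) = (cis (- x) * Cconj z)%C.
Proof. unfold cis, Cconj. apply injective_projections; simpl; rewrite ?cos_neg, ?sin_neg; ring. Qed.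

Lemma H1_cis tau v m : H1 tau v m = (cis (- (IZR (m ^ 3) * tau)) * v m)%C.
Proof. unfold H1, cis. rewrite cos_neg, sin_neg. reflexivity. Qed.

Lemma H1_opp_cis tau v m : H1 (- tau) v m = (cis (IZR (m ^ 3) * tau) * v m)%C.
Proof. rewrite H1_cis. do 3 f_equal. ring. Qed.

Lemma Cmod_H1 tau v n : Cmod (H1 tau v n) = Cmod (v n).
Proof. rewrite H1_cis, Cmod_mult, Cmod_cis. ring. Qed.

(** * Integrating series term by term *)

Lemma Series_tail_le (a b : nat -> R) N : (forall k, Rabs (a k) <= b k) -> ex_series b ->
  Rabs (Series a - sum_n a N) <= Series b - sum_n b N.
Proof.
  intros Hab Hb.
  assert (Ha : ex_series a) by (apply (ex_series_le a b); auto).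
  rewrite (Series_incr_n a (S N)), (Series_incr_n b (S N)); auto; try lia.
  simpl pred. rewrite !sum_n_Reals.
  replace (sum_f_R0 a N + Series (fun k => a (S N + k)%nat) - sum_f_R0 a N)
    with (Series (fun k => a (S N + k)%nat)) by ring.
  replace (sum_f_R0 b N + Series (fun k => b (S N + k)%nat) - sum_f_R0 b N)
    with (Series (fun k => b (S N + k)%nat)) by ring.
  assert (Hb' : ex_series (fun k => b (S N + k)%nat)) by (apply ex_series_incr_n; auto).
  assert (Ha' : ex_series (fun k => Rabs (a (S N + k)%nat))).
  { apply (@ex_series_le R_AbsRing R_CompleteNormedModule _ (fun k => b (S N + k)%nat)); auto.
    intros k. unfold norm; simpl. unfold abs; simpl. rewrite Rabs_Rabsolu. auto. }
  eapply Rle_trans; [apply Series_Rabs; auto|].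
  apply Series_le; auto. intros; split; [apply Rabs_pos| auto].
Qed.

Lemma Series_tail_small (b : nat -> R) : ex_series b -> forall eps : posreal,
  eventually (fun N => Rabs (sum_n b N - Series b) < eps).
Proof.
  intros Hb eps. apply Series_correct in Hb.
  apply (Hb (fun x => Rabs (x - Series b) < eps)). exists eps. intros y Hy. exact Hy.
Qed.

Lemma is_RInt_lincomb (f g : R -> R) a b If Ig p r : is_RInt f a b If -> is_RInt g a b Ig ->
  is_RInt (fun t => p * f t + r * g t) a b (p * If + r * Ig).
Proof.
  intros Hf Hg. apply (is_RInt_plus (fun t => p * f t) (fun t => r * g t)).
  - apply (is_RInt_scal f a b p If Hf).
  - apply (is_RInt_scal g a b r Ig Hg).
Qed.

Lemma is_RInt_sum_n (f : R -> nat -> R) (F : nat -> R) a b :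
  (forall k, is_RInt (fun t => f t k) a b (F k)) ->
  forall N, is_RInt (fun t => sum_n (f t) N) a b (sum_n F N).
Proof.
  intros H N. induction N.
  - rewrite sum_O. eapply is_RInt_ext; [|apply (H 0%nat)]. intros; rewrite sum_O; auto.
  - rewrite sum_Sn. eapply is_RInt_ext; [|apply (is_RInt_plus _ _ _ _ _ _ IHN (H (S N)))].
    intros; rewrite sum_Sn; auto.
Qed.

(* A dominating summable [M] makes the partial sums converge uniformly in [t]. *)
Lemma is_RInt_zsum (T : R) (f : R -> Z -> R) (F : Z -> R) (M : Z -> R) :
  (forall k, is_RInt (fun t => f t k) 0 T (F k)) ->
  (forall t k, Rabs (f t k) <= M k) -> zsummable M -> zsummable F ->
  is_RInt (fun t => zsum (f t)) 0 T (zsum F).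
Proof.
  intros HI Hb HM HF.
  assert (HIp : forall k, is_RInt (fun t => zfold (f t) k) 0 T (zfold F k)).
  { intros k. unfold zfold. apply (is_RInt_plus (fun t => f t (Z.of_nat k)) (fun t => f t (- Z.of_nat k - 1)%Z)); auto. }
  pose proof (is_RInt_sum_n (fun t k => zfold (f t) k) (zfold F) 0 T HIp) as HS.
  assert (Hpb : forall t k, Rabs (zfold (f t) k) <= zfold M k).
  { intros t k. unfold zfold. eapply Rle_trans; [apply Rabs_triang|].
    pose proof (Hb t (Z.of_nat k)). pose proof (Hb t (- Z.of_nat k - 1)%Z). lra. }
  assert (Hunif : filterlim (fun N t => sum_n (zfold (f t)) N) eventually
                    (@locally (fct_UniformSpace R R_UniformSpace) (fun t => zsum (f t)))).
  { intros P [eps HP]. destruct (Series_tail_small (zfold M) HM eps) as [N0 HN0].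
    exists N0. intros N HN. apply HP. intros t. specialize (HN0 N HN).
    change (Rabs (sum_n (zfold (f t)) N - zsum (f t)) < eps).
    rewrite Rabs_minus_sym. eapply Rle_lt_trans; [apply Series_tail_le; [apply Hpb| apply HM]|].
    rewrite Rabs_minus_sym in HN0.
    apply Rle_lt_trans with (Rabs (Series (zfold M) - sum_n (zfold M) N)); [apply Rle_abs| auto]. }
  destruct (filterlim_RInt (fun N t => sum_n (zfold (f t)) N) 0 T eventually eventually_filter
             (fun t => zsum (f t)) (fun N => sum_n (zfold F) N) HS Hunif) as [If [HIf HIg]].
  replace (zsum F) with If; auto.
  assert (H1 : is_lim_seq (sum_n (zfold F)) If) by exact HIf.
  assert (H2 : is_lim_seq (sum_n (zfold F)) (zsum F)) by exact (Series_correct _ HF).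
  apply is_lim_seq_unique in H1, H2. rewrite H1 in H2. injection H2; auto.
Qed.

Lemma is_RInt_sumZ (T : R) (g : R -> Z -> C) (J : Z -> C) (M : Z -> R) :
  (forall k, is_RInt (fun t => Re (g t k)) 0 T (Re (J k))) ->
  (forall k, is_RInt (fun t => Im (g t k)) 0 T (Im (J k))) ->
  (forall t k, Cmod (g t k) <= M k) -> zsummable M -> csummable J ->
  is_RInt (fun t => Re (sumZ (g t))) 0 T (Re (sumZ J)) /\
  is_RInt (fun t => Im (sumZ (g t))) 0 T (Im (sumZ J)).
Proof.
  intros HR HI Hb HM HJ. split.
  - apply (is_RInt_zsum T (fun t k => Re (g t k)) (fun k => Re (J k)) M); auto.
    + intros t k. eapply Rle_trans; [apply re_le_Cmod| auto].
    + apply csummable_re; auto.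
  - apply (is_RInt_zsum T (fun t k => Im (g t k)) (fun k => Im (J k)) M); auto.
    + intros t k. eapply Rle_trans; [apply im_le_Cmod| auto].
    + apply csummable_im; auto.
Qed.

(** * Periodicity and the averages of characters *)

Lemma cos_periodZ x (z : Z) : cos (x + 2 * IZR z * PI) = cos x.
Proof.
  destruct z as [|p|p].
  - simpl. f_equal. ring.
  - replace (IZR (Z.pos p)) with (INR (Pos.to_nat p)) by (rewrite INR_IZR_INZ, positive_nat_Z; auto).
    apply cos_period.
  - replace (IZR (Z.neg p)) with (- INR (Pos.to_nat p))
      by (rewrite INR_IZR_INZ, <- Pos2Z.opp_pos, opp_IZR, positive_nat_Z; auto).
    rewrite <- (cos_period (x + 2 * - INR (Pos.to_nat p) * PI) (Pos.to_nat p)). f_equal. ring.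
Qed.

Lemma sin_periodZ x (z : Z) : sin (x + 2 * IZR z * PI) = sin x.
Proof.
  destruct z as [|p|p].
  - simpl. f_equal. ring.
  - replace (IZR (Z.pos p)) with (INR (Pos.to_nat p)) by (rewrite INR_IZR_INZ, positive_nat_Z; auto).
    apply sin_period.
  - replace (IZR (Z.neg p)) with (- INR (Pos.to_nat p))
      by (rewrite INR_IZR_INZ, <- Pos2Z.opp_pos, opp_IZR, positive_nat_Z; auto).
    rewrite <- (sin_period (x + 2 * - INR (Pos.to_nat p) * PI) (Pos.to_nat p)). f_equal. ring.
Qed.

Lemma H1_periodZ tau (z : Z) : H1 (tau + 2 * IZR z * PI) = H1 tau.
Proof.
  apply functional_extensionality; intros v. apply functional_extensionality; intros n.
  unfold H1. replace (IZR (n ^ 3) * (tau + 2 * IZR z * PI))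
    with (IZR (n ^ 3) * tau + 2 * IZR (n ^ 3 * z) * PI) by (rewrite mult_IZR; ring).
  rewrite cos_periodZ, sin_periodZ. reflexivity.
Qed.

Lemma Fnl_period tau w : Fnl (tau + 2 * PI) w = Fnl tau w.
Proof.
  unfold Fnl.
  replace (tau + 2 * PI) with (tau + 2 * IZR 1 * PI) by (simpl; ring).
  replace (- (tau + 2 * IZR 1 * PI)) with (- tau + 2 * IZR (-1) * PI) by (simpl; ring).
  rewrite !H1_periodZ. reflexivity.
Qed.

Lemma is_RInt_cos_mult (z : Z) :
  is_RInt (fun t => cos (IZR z * t)) 0 (2 * PI) (if Z.eqb z 0 then 2 * PI else 0).
Proof.
  destruct (Z.eqb_spec z 0) as [->|Hz].
  - replace (2 * PI) with (scal (2 * PI - 0) 1) at 2 by (unfold scal; simpl; unfold mult; simpl; ring).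
    eapply is_RInt_ext; [|apply (is_RInt_const (V := R_NormedModule))].
    intros; simpl. rewrite Rmult_0_l, cos_0. auto.
  - set (a := IZR z). assert (Ha : a <> 0) by (apply not_0_IZR; auto).
    replace 0 with (minus (sin (a * (2 * PI)) / a) (sin (a * 0) / a)) at 2.
    + apply (is_RInt_derive (fun t => sin (a * t) / a)).
      * intros x _. auto_derive; auto. field; auto.
      * intros x _. apply (ex_derive_continuous (V := R_NormedModule)). auto_derive; auto.
    + unfold minus, plus, opp; simpl. rewrite Rmult_0_r, sin_0.
      replace (a * (2 * PI)) with (0 + 2 * IZR z * PI) by (unfold a; ring).
      rewrite sin_periodZ, sin_0. field; auto.
Qed.

Lemma is_RInt_sin_mult (z : Z) : is_RInt (fun t => sin (IZR z * t)) 0 (2 * PI) 0.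
Proof.
  destruct (Z.eq_dec z 0) as [->|Hz].
  - replace 0 with (scal (2 * PI - 0) 0) at 2 by (unfold scal; simpl; unfold mult; simpl; ring).
    eapply is_RInt_ext; [|apply (is_RInt_const (V := R_NormedModule))].
    intros; simpl. rewrite Rmult_0_l, sin_0. auto.
  - set (a := IZR z). assert (Ha : a <> 0) by (apply not_0_IZR; auto).
    replace 0 with (minus (- cos (a * (2 * PI)) / a) (- cos (a * 0) / a)) at 2.
    + apply (is_RInt_derive (fun t => - cos (a * t) / a)).
      * intros x _. auto_derive; auto. field; auto.
      * intros x _. apply (ex_derive_continuous (V := R_NormedModule)). auto_derive; auto.
    + unfold minus, plus, opp; simpl. rewrite Rmult_0_r, cos_0.
      replace (a * (2 * PI)) with (0 + 2 * IZR z * PI) by (unfold a; ring).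
      rewrite cos_periodZ, cos_0. field; auto.
Qed.

(** * The Sobolev weight *)

Lemma exp_le_exp x y : x <= y -> exp x <= exp y.
Proof. intros [H|H]; [left; apply exp_increasing; auto| subst; lra]. Qed.

Lemma ln_le_sub1 y : 0 < y -> ln y <= y - 1.
Proof. intros H. pose proof (exp_ineq1_le (ln y)). rewrite exp_ln in H0; auto. lra. Qed.

Lemma ln_nonneg y : 1 <= y -> 0 <= ln y.
Proof. intros [H|H]; [rewrite <- ln_1; left; apply ln_increasing; lra| subst; rewrite ln_1; lra]. Qed.

Lemma quadratic_le_linear C eps : 0 <= C -> 0 < eps -> exists delta, 0 < delta /\
  forall x, 0 <= x < delta -> x <= 1 /\ C * x ^ 2 <= eps * x.
Proof.
  intros HC Heps. exists (Rmin 1 (eps / (C + 1))).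
  split; [apply Rmin_pos; [lra| apply Rdiv_lt_0_compat; lra]|].
  intros x [Hx0 Hx]. pose proof (Rmin_l 1 (eps / (C + 1))). pose proof (Rmin_r 1 (eps / (C + 1))).
  split; [lra|].
  assert (HxC : x * C <= eps).
  { apply Rle_trans with (eps / (C + 1) * C); [apply Rmult_le_compat_r; lra|].
    apply Rmult_le_reg_l with (C + 1); [lra|]. field_simplify; nra. }
  replace (C * x ^ 2) with (x * C * x) by ring. apply Rmult_le_compat_r; lra.
Qed.

Definition rpow_neg (p x : R) : R := exp (- p * ln x).

Section Sobolev.
Variable s : R.
Hypothesis hs : 1/2 < s.

Let q := 2 * s - 1.

Lemma q_pos : 0 < q.
Proof. unfold q; lra. Qed.

(* From [ln x - ln (x - 1) >= 1/x]. *)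
Lemma rpow_neg_telescope (x : R) : 2 <= x ->
  q * rpow_neg (2 * s) x <= rpow_neg q (x - 1) - rpow_neg q x.
Proof.
  intros Hx. unfold rpow_neg.
  set (d := ln x - ln (x - 1)).
  assert (Hd : 1 / x <= d).
  { unfold d. pose proof (ln_le_sub1 ((x - 1) / x)).
    rewrite ln_div in H by lra.
    assert ((x - 1) / x - 1 = - (1 / x)) by (field; lra).
    assert (0 < (x - 1) / x) by (apply Rdiv_lt_0_compat; lra). lra. }
  assert (E1 : - q * ln (x - 1) = - q * ln x + q * d) by (unfold d; ring).
  rewrite E1, exp_plus.
  pose proof q_pos as Hq.
  assert (1 + q * d <= exp (q * d)) by apply exp_ineq1_le.
  assert (E2 : - (2 * s) * ln x = - q * ln x + - ln x) by (unfold q; ring).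
  rewrite E2, exp_plus, exp_Ropp, exp_ln by lra.
  assert (0 < exp (- q * ln x)) by apply exp_pos.
  assert (q / x <= q * d).
  { replace (q / x) with (q * (1 / x)) by (field; lra). apply Rmult_le_compat_l; lra. }
  assert (exp (- q * ln x) * (1 + q / x) <= exp (- q * ln x) * exp (q * d)).
  { apply Rmult_le_compat_l; lra. }
  replace (q * (exp (- q * ln x) * / x))
    with (exp (- q * ln x) * (1 + q / x) - exp (- q * ln x)) by (field; lra).
  lra.
Qed.

Fixpoint pseries_partial (M : nat) : R :=
  match M with O => 0 | S M' => pseries_partial M' + rpow_neg (2 * s) (INR (S M')) end.

Lemma pseries_partial_bound M : pseries_partial M <= 1 + 1 / q.
Proof.
  pose proof q_pos as Hq.
  assert (H : forall K, (1 <= K)%nat -> pseries_partial K <= 1 + (1 - rpow_neg q (INR K)) / q).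
  { clear M. intros K; induction K as [|M IH]; intros HM; [lia|].
    destruct M as [|M].
    - simpl. unfold rpow_neg. rewrite ln_1, !Rmult_0_r, exp_0. unfold Rdiv; lra.
    - specialize (IH ltac:(lia)). cbn [pseries_partial].
      cbn [pseries_partial] in IH.
      pose proof (rpow_neg_telescope (INR (S (S M)))) as Ht.
      rewrite !S_INR in *.
      replace (INR M + 1 + 1 - 1) with (INR M + 1) in Ht by ring.
      specialize (Ht ltac:(pose proof (pos_INR M); lra)).
      assert (rpow_neg (2 * s) (INR M + 1 + 1)
              <= (rpow_neg q (INR M + 1) - rpow_neg q (INR M + 1 + 1)) / q).
      { apply Rmult_le_reg_l with q; auto.
        replace (q * ((rpow_neg q (INR M + 1) - rpow_neg q (INR M + 1 + 1)) / q))
          with (rpow_neg q (INR M + 1) - rpow_neg q (INR M + 1 + 1)) by (field; lra). auto. }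
      unfold Rdiv in *. lra. }
  destruct M.
  - simpl. assert (0 < 1 / q) by (apply Rdiv_lt_0_compat; lra). lra.
  - eapply Rle_trans; [apply H; lia|]. assert (0 < rpow_neg q (INR (S M))) by apply exp_pos.
    assert (0 < / q) by (apply Rinv_0_lt_compat; lra). unfold Rdiv. nra.
Qed.

Lemma weight_ge1 n : 1 <= weight s n.
Proof.
  unfold weight, Rpower. apply Rle_trans with (exp 0); [rewrite exp_0; lra| apply exp_le_exp].
  apply Rmult_le_pos; [lra|]. apply ln_nonneg. pose proof (pow2_ge_0 (IZR n)). lra.
Qed.

Lemma weight_pos n : 0 < weight s n.
Proof. pose proof (weight_ge1 n); lra. Qed.

Lemma weight_opp n : weight s (- n) = weight s n.
Proof. unfold weight. rewrite opp_IZR. f_equal. ring. Qed.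

Lemma inv_weight_le (n : Z) (x : R) : 1 <= x -> IZR n ^ 2 = x ^ 2 ->
  / weight s n <= rpow_neg (2 * s) x.
Proof.
  intros Hx E. unfold weight, Rpower, rpow_neg. rewrite <- exp_Ropp, E. apply exp_le_exp.
  assert (ln (x ^ 2) <= ln (x ^ 2 + 1)) by (left; apply ln_increasing; nra).
  rewrite ln_pow in H by lra. simpl INR in H.
  pose proof (ln_nonneg x Hx). nra.
Qed.

Lemma lsum_window_inv_weight N :
  lsum (fun n => / weight s n) (window (S N)) <= 1 + pseries_partial N + pseries_partial (S N).
Proof.
  induction N.
  - cbn [window lsum pseries_partial]. simpl Z.of_nat.
    assert (/ weight s 0 = 1).
    { unfold weight, Rpower. simpl. rewrite Rmult_0_l, Rplus_0_l, ln_1, Rmult_0_r, exp_0. lra. }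
    assert (/ weight s (- 0 - 1) <= rpow_neg (2 * s) (INR 1)) by (apply inv_weight_le; simpl; lra).
    lra.
  - change (lsum (fun n => / weight s n) (window (S (S N)))) with
      (/ weight s (Z.of_nat (S N)) + (/ weight s (- Z.of_nat (S N) - 1)
        + lsum (fun n => / weight s n) (window (S N)))).
    cbn [pseries_partial] in *.
    assert (/ weight s (Z.of_nat (S N)) <= rpow_neg (2 * s) (INR (S N))).
    { apply inv_weight_le. rewrite S_INR; pose proof (pos_INR N); lra. rewrite <- INR_IZR_INZ; auto. }
    assert (/ weight s (- Z.of_nat (S N) - 1) <= rpow_neg (2 * s) (INR (S (S N)))).
    { apply inv_weight_le. rewrite !S_INR; pose proof (pos_INR N); lra.
      rewrite minus_IZR, opp_IZR, <- INR_IZR_INZ, !S_INR. ring. }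
    lra.
Qed.

Lemma zsummable_inv_weight : zsummable (fun n => / weight s n).
Proof.
  apply (zsummable_window_bound _ (1 + 2 * (1 + 1 / q))).
  - intros x; left; apply Rinv_0_lt_compat, weight_pos.
  - intros [|N].
    + simpl. assert (0 < 1 / q) by (apply Rdiv_lt_0_compat; [lra| apply q_pos]). lra.
    + eapply Rle_trans; [apply lsum_window_inv_weight|].
      pose proof (pseries_partial_bound N). pose proof (pseries_partial_bound (S N)). lra.
Qed.

(* Peetre-type splitting: [|n|^2 + 1 <= 4 (|m|^2 + 1)] or [<= 4 (|n - m|^2 + 1)]. *)
Lemma weight_split n m : weight s n <= Rpower 4 s * (weight s m + weight s (n - m)).
Proof.
  assert (H : IZR n ^ 2 + 1 <= 4 * (IZR m ^ 2 + 1) \/ IZR n ^ 2 + 1 <= 4 * (IZR (n - m) ^ 2 + 1)).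
  { rewrite minus_IZR. destruct (Rle_dec (IZR m ^ 2) ((IZR n - IZR m) ^ 2)); [right|left]; nra. }
  assert (Hm := weight_pos m). assert (Hnm := weight_pos (n - m)).
  assert (H4 : 0 < Rpower 4 s) by apply exp_pos.
  destruct H as [H|H].
  - apply Rle_trans with (Rpower 4 s * weight s m); [|nra].
    unfold weight. rewrite Rpower_mult_distr by (try lra; pose proof (pow2_ge_0 (IZR m)); lra).
    apply Rle_Rpower_l; [lra|]. split; auto. pose proof (pow2_ge_0 (IZR n)); lra.
  - apply Rle_trans with (Rpower 4 s * weight s (n - m)); [|nra].
    unfold weight. rewrite Rpower_mult_distr by (try lra; pose proof (pow2_ge_0 (IZR (n - m))); lra).
    apply Rle_Rpower_l; [lra|]. split; auto. pose proof (pow2_ge_0 (IZR n)); lra.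
Qed.

Definition split_const : R := sqrt (Rpower 4 s).

Lemma split_const_pos : 0 < split_const.
Proof. apply sqrt_lt_R0, exp_pos. Qed.

Lemma sqrt_weight_split n m :
  sqrt (weight s n) <= split_const * (sqrt (weight s m) + sqrt (weight s (n - m))).
Proof.
  unfold split_const. assert (Hm := weight_pos m). assert (Hnm := weight_pos (n - m)).
  assert (H4 : 0 < Rpower 4 s) by apply exp_pos.
  pose proof (sqrt_pos (weight s m)). pose proof (sqrt_pos (weight s (n - m))).
  eapply Rle_trans; [apply sqrt_le_1_alt, (weight_split n m)|].
  rewrite sqrt_mult by lra. apply Rmult_le_compat_l; [apply sqrt_pos|].
  apply Rsqr_incr_0_var; [|lra]. rewrite Rsqr_plus, !Rsqr_sqrt by lra. nra.
Qed.

(** * The space H^s *)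

Definition hs_dens (v : seqZ) (n : Z) : R := weight s n * Cmod (v n) ^ 2.

Lemma in_Hs_zsummable v : in_Hs s v <-> zsummable (hs_dens v).
Proof. reflexivity. Qed.

Lemma hs_norm_zsum v : hs_norm s v = sqrt (zsum (hs_dens v)).
Proof. reflexivity. Qed.

Lemma hs_dens_nonneg v n : 0 <= hs_dens v n.
Proof. unfold hs_dens. apply Rmult_le_pos; [left; apply weight_pos| apply pow2_ge_0]. Qed.

Lemma hs_norm_nonneg v : 0 <= hs_norm s v.
Proof. apply sqrt_pos. Qed.

Lemma zsum_hs_dens_nonneg v : in_Hs s v -> 0 <= zsum (hs_dens v).
Proof. intros H. apply zsum_nonneg; auto. apply hs_dens_nonneg. Qed.

Lemma hs_norm_sq v : in_Hs s v -> hs_norm s v ^ 2 = zsum (hs_dens v).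
Proof. intros H. rewrite hs_norm_zsum, pow2_sqrt; auto. apply zsum_hs_dens_nonneg; auto. Qed.

Lemma Hs_sadd u v : in_Hs s u -> in_Hs s v ->
  in_Hs s (sadd u v) /\ hs_norm s (sadd u v) <= 2 * (hs_norm s u + hs_norm s v).
Proof.
  intros Hu Hv.
  assert (Hle : forall n, 0 <= hs_dens (sadd u v) n <= 2 * hs_dens u n + 2 * hs_dens v n).
  { intros n. split; [apply hs_dens_nonneg|]. unfold hs_dens, sadd. pose proof (weight_pos n).
    pose proof (Cmod_triangle (u n) (v n)). pose proof (Cmod_ge_0 (u n + v n)%C).
    pose proof (Cmod_ge_0 (u n)). pose proof (Cmod_ge_0 (v n)).
    assert (Cmod (u n + v n)%C ^ 2 <= 2 * Cmod (u n) ^ 2 + 2 * Cmod (v n) ^ 2).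
    { apply Rle_trans with ((Cmod (u n) + Cmod (v n)) ^ 2); [apply pow_incr; lra|].
      pose proof (pow2_ge_0 (Cmod (u n) - Cmod (v n))). nra. }
    nra. }
  assert (Hz : zsummable (fun n => 2 * hs_dens u n + 2 * hs_dens v n))
    by (apply zsummable_plus; apply zsummable_scal; auto).
  destruct (zsummable_le _ _ Hle Hz) as [Hok Hb].
  split; auto. rewrite zsum_plus, !zsum_scal in Hb by (apply zsummable_scal; auto).
  rewrite !hs_norm_zsum.
  pose proof (zsum_hs_dens_nonneg u Hu). pose proof (zsum_hs_dens_nonneg v Hv).
  set (A := zsum (hs_dens u)) in *. set (B := zsum (hs_dens v)) in *.
  apply Rle_trans with (sqrt (2 * A + 2 * B)); [apply sqrt_le_1_alt; auto|].
  pose proof (sqrt_pos A). pose proof (sqrt_pos B).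
  rewrite <- (sqrt_pow2 (2 * (sqrt A + sqrt B))) by lra.
  apply sqrt_le_1_alt.
  replace ((2 * (sqrt A + sqrt B)) ^ 2) with (4 * (sqrt A ^ 2 + sqrt B ^ 2) + 8 * sqrt A * sqrt B) by ring.
  rewrite !pow2_sqrt by auto. nra.
Qed.

Lemma Hs_zero : in_Hs s szero /\ hs_norm s szero = 0.
Proof.
  assert (E : forall n, hs_dens szero n = 0) by (intros n; unfold hs_dens, szero; rewrite Cmod_0; ring).
  split.
  - apply in_Hs_zsummable, zsummable_ext with (fun _ => 0); [intros; rewrite E; auto| apply zsum_zero].
  - rewrite hs_norm_zsum, (zsum_ext _ (fun _ => 0)), (proj2 zsum_zero) by auto. apply sqrt_0.
Qed.

Lemma Cmod_le_hs_norm v n : in_Hs s v -> Cmod (v n) <= hs_norm s v.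
Proof.
  intros Hv. rewrite hs_norm_zsum, <- (sqrt_pow2 (Cmod (v n))) by apply Cmod_ge_0.
  apply sqrt_le_1_alt, Rle_trans with (hs_dens v n).
  - unfold hs_dens. pose proof (weight_ge1 n). pose proof (pow2_ge_0 (Cmod (v n))). nra.
  - apply le_zsum; auto. apply hs_dens_nonneg.
Qed.

Definition l1_const : R := sqrt (zsum (fun n => / weight s n)).

Lemma l1_const_nonneg : 0 <= l1_const.
Proof. apply sqrt_pos. Qed.

(* Cauchy-Schwarz against [sum 1/weight < oo]: this is where [s > 1/2] is used. *)
Lemma Hs_l1 v : in_Hs s v ->
  zsummable (fun n => Cmod (v n)) /\ zsum (fun n => Cmod (v n)) <= l1_const * hs_norm s v.
Proof.
  intros Hv.
  set (x := fun n => sqrt (weight s n) * Cmod (v n)).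
  set (y := fun n => / sqrt (weight s n)).
  assert (Hsw : forall n, 0 < sqrt (weight s n)) by (intros; apply sqrt_lt_R0, weight_pos).
  assert (Ex : forall n, x n ^ 2 = hs_dens v n).
  { intros n; unfold x, hs_dens. rewrite Rpow_mult_distr, pow2_sqrt; auto. left; apply weight_pos. }
  assert (Ey : forall n, y n ^ 2 = / weight s n).
  { intros n; unfold y. rewrite pow_inv, pow2_sqrt; auto. left; apply weight_pos. }
  assert (Exy : forall n, Rabs (x n) * Rabs (y n) = Cmod (v n)).
  { intros n. unfold x, y. specialize (Hsw n). pose proof (Cmod_ge_0 (v n)).
    rewrite Rabs_mult, !Rabs_pos_eq; try (left; apply Rinv_0_lt_compat); try lra. field. lra. }
  destruct (zsum_cauchy_schwarz x y) as [H1 H2].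
  - apply zsummable_ext with (hs_dens v); [intros n; rewrite Ex; auto| auto].
  - apply zsummable_ext with (fun n => / weight s n); [intros n; rewrite Ey; auto| apply zsummable_inv_weight].
  - split; [apply zsummable_ext with (fun n => Rabs (x n) * Rabs (y n)); auto|].
    rewrite (zsum_ext _ (fun n => Rabs (x n) * Rabs (y n))) by (intros; rewrite Exy; auto).
    rewrite (zsum_ext (fun n => x n ^ 2) (hs_dens v)), (zsum_ext (fun n => y n ^ 2) (fun n => / weight s n))
      in H2 by auto.
    unfold l1_const. rewrite hs_norm_zsum. lra.
Qed.

Lemma Hs_H1 tau v : in_Hs s v -> in_Hs s (H1 tau v) /\ hs_norm s (H1 tau v) = hs_norm s v.
Proof.
  intros Hv. assert (E : forall n, hs_dens (H1 tau v) n = hs_dens v n)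
    by (intros; unfold hs_dens; rewrite Cmod_H1; auto).
  split; [apply in_Hs_zsummable, zsummable_ext with (hs_dens v); auto|].
  rewrite !hs_norm_zsum, (zsum_ext _ (hs_dens v)); auto.
Qed.

Lemma Hs_sconj v : in_Hs s v -> in_Hs s (sconj v) /\ hs_norm s (sconj v) = hs_norm s v.
Proof.
  intros Hv. assert (E : forall n, hs_dens (sconj v) n = hs_dens v (- n)).
  { intros; unfold hs_dens, sconj. rewrite Cmod_conj, <- (weight_opp n) at 1. auto. }
  destruct (zsum_reindex_bij (hs_dens v) Z.opp Z.opp (hs_dens_nonneg v) Hv) as [H1 H2]; try (intros; lia).
  split; [apply in_Hs_zsummable, zsummable_ext with (fun n => hs_dens v (- n)); auto|].
  rewrite !hs_norm_zsum, (zsum_ext _ (fun n => hs_dens v (- n))), H2 by auto; auto.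
Qed.

(** * H^s is an algebra for s > 1/2 *)

Lemma csummable_conv_term u v n : in_Hs s u -> in_Hs s v ->
  csummable (fun m => (u m * v (n - m)%Z)%C).
Proof.
  intros Hu Hv. apply csummable_dom with (fun m => hs_norm s v * Cmod (u m)).
  - intros m. rewrite Cmod_mult. pose proof (Cmod_le_hs_norm v (n - m)%Z Hv).
    pose proof (Cmod_ge_0 (u m)). nra.
  - apply zsummable_scal, (Hs_l1 u Hu).
Qed.

Definition sqrt_weighted (v : seqZ) (m : Z) : R := sqrt (weight s m) * Cmod (v m).

Lemma sqrt_weighted_nonneg v m : 0 <= sqrt_weighted v m.
Proof. apply Rmult_le_pos; [apply sqrt_pos| apply Cmod_ge_0]. Qed.

Lemma sqrt_weighted_sq v m : sqrt_weighted v m ^ 2 = hs_dens v m.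
Proof. unfold sqrt_weighted, hs_dens. rewrite Rpow_mult_distr, pow2_sqrt; auto. left; apply weight_pos. Qed.

Lemma zsummable_sqrt_weighted_sq v : in_Hs s v -> zsummable (fun m => sqrt_weighted v m ^ 2).
Proof. intros Hv. apply zsummable_ext with (hs_dens v); auto. intros; rewrite sqrt_weighted_sq; auto. Qed.

Lemma sqrt_weight_conv_le u v n : in_Hs s u -> in_Hs s v ->
  sqrt (weight s n) * Cmod (conv u v n) <=
  split_const * (zconv (fun m => Cmod (v m)) (sqrt_weighted u) n
                 + zconv (fun m => Cmod (u m)) (sqrt_weighted v) n).
Proof.
  intros Hu Hv.
  set (a := fun m => Cmod (u m)). set (b := fun m => Cmod (v m)).
  assert (Hab : zsummable (fun m => a m * b (n - m)%Z)).
  { apply zsummable_ext with (fun m => Cmod (u m * v (n - m)%Z)%C); [intros; apply Cmod_mult|].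
    apply csummable_conv_term; auto. }
  destruct (zconv_sq_le b (sqrt_weighted u) (fun m => Cmod_ge_0 _) (sqrt_weighted_nonneg u)
              (proj1 (Hs_l1 v Hv)) (zsummable_sqrt_weighted_sq u Hu) n) as [H1 _].
  destruct (zconv_sq_le a (sqrt_weighted v) (fun m => Cmod_ge_0 _) (sqrt_weighted_nonneg v)
              (proj1 (Hs_l1 u Hu)) (zsummable_sqrt_weighted_sq v Hv) n) as [H2 _].
  (* reflect [m -> n - m] so that the weight of the first factor is the one shifted *)
  destruct (zsum_reindex_bij (fun m => b m * sqrt_weighted u (n - m)%Z) (fun m => (n - m)%Z)
              (fun m => (n - m)%Z) (fun m => Rmult_le_pos _ _ (Cmod_ge_0 _) (sqrt_weighted_nonneg u _)) H1)
    as [H3 E3]; try (intros; lia).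
  cbv beta in H3, E3.
  assert (E1 : zconv b (sqrt_weighted u) n = zsum (fun m => sqrt_weighted u m * b (n - m)%Z)).
  { unfold zconv. rewrite <- E3. apply zsum_ext. intros m. rewrite Rmult_comm. do 3 f_equal. lia. }
  assert (H3' : zsummable (fun m => sqrt_weighted u m * b (n - m)%Z)).
  { apply zsummable_ext with (fun m => b (n - m)%Z * sqrt_weighted u (n - (n - m))%Z); auto.
    intros m. rewrite Rmult_comm. do 3 f_equal. lia. }
  apply Rle_trans with (sqrt (weight s n) * zsum (fun m => a m * b (n - m)%Z)).
  - apply Rmult_le_compat_l; [apply sqrt_pos|]. unfold conv.
    eapply Rle_trans; [apply Cmod_sumZ, csummable_conv_term; auto|].
    right. apply zsum_ext. intros m. apply Cmod_mult.
  - rewrite <- zsum_scal, E1. unfold zconv.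
    rewrite <- zsum_plus, <- zsum_scal; auto.
    apply zsum_le; [apply zsummable_scal; auto| apply zsummable_scal, zsummable_plus; auto|].
    intros m. pose proof (sqrt_weight_split n m) as Hsplit.
    unfold sqrt_weighted. fold (a m) (b (n - m)%Z).
    pose proof (Cmod_ge_0 (u m)). pose proof (Cmod_ge_0 (v (n - m)%Z)).
    assert (0 <= a m * b (n - m)%Z) by (apply Rmult_le_pos; auto).
    pose proof (Rmult_le_compat_r _ _ _ H Hsplit). nra.
Qed.

Definition conv_const : R := 2 * split_const * l1_const.

Lemma conv_const_nonneg : 0 <= conv_const.
Proof.
  unfold conv_const. pose proof split_const_pos. pose proof l1_const_nonneg.
  apply Rmult_le_pos; lra.
Qed.

Lemma hs_dens_conv_le u v n : in_Hs s u -> in_Hs s v ->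
  hs_dens (conv u v) n <= 2 * split_const ^ 2 *
    (zconv (fun m => Cmod (v m)) (sqrt_weighted u) n ^ 2
     + zconv (fun m => Cmod (u m)) (sqrt_weighted v) n ^ 2).
Proof.
  intros Hu Hv. pose proof (sqrt_weight_conv_le u v n Hu Hv) as H.
  set (P1 := zconv (fun m => Cmod (v m)) (sqrt_weighted u) n) in *.
  set (P2 := zconv (fun m => Cmod (u m)) (sqrt_weighted v) n) in *.
  rewrite <- sqrt_weighted_sq.
  pose proof (sqrt_weighted_nonneg (conv u v) n). unfold sqrt_weighted in *.
  apply Rle_trans with ((split_const * (P1 + P2)) ^ 2); [apply pow_incr; lra|].
  pose proof (pow2_ge_0 (P1 - P2)). pose proof (pow2_ge_0 split_const). rewrite Rpow_mult_distr. nra.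
Qed.

Lemma young_sqrt_weighted u v : in_Hs s u -> in_Hs s v ->
  zsummable (fun n => zconv (fun m => Cmod (v m)) (sqrt_weighted u) n ^ 2) /\
  zsum (fun n => zconv (fun m => Cmod (v m)) (sqrt_weighted u) n ^ 2)
    <= (l1_const * hs_norm s u * hs_norm s v) ^ 2.
Proof.
  intros Hu Hv. destruct (Hs_l1 v Hv) as [Hl1 Hl1le].
  destruct (young_l1_l2 _ _ (fun m => Cmod_ge_0 _) (sqrt_weighted_nonneg u) Hl1
              (zsummable_sqrt_weighted_sq u Hu)) as [Y Yle].
  split; auto. eapply Rle_trans; [exact Yle|].
  rewrite (zsum_ext (fun m => sqrt_weighted u m ^ 2) (hs_dens u)), <- hs_norm_sq
    by (auto; intros; apply sqrt_weighted_sq).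
  assert (0 <= zsum (fun m => Cmod (v m))) by (apply zsum_nonneg; auto; intros; apply Cmod_ge_0).
  assert (zsum (fun m => Cmod (v m)) ^ 2 <= (l1_const * hs_norm s v) ^ 2) by (apply pow_incr; lra).
  replace ((l1_const * hs_norm s u * hs_norm s v) ^ 2) with ((l1_const * hs_norm s v) ^ 2 * hs_norm s u ^ 2)
    by ring.
  apply Rmult_le_compat_r; auto using pow2_ge_0.
Qed.

Lemma Hs_conv u v : in_Hs s u -> in_Hs s v ->
  in_Hs s (conv u v) /\ hs_norm s (conv u v) <= conv_const * hs_norm s u * hs_norm s v.
Proof.
  intros Hu Hv.
  destruct (young_sqrt_weighted u v Hu Hv) as [Y1 Y1le].
  destruct (young_sqrt_weighted v u Hv Hu) as [Y2 Y2le].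
  assert (Hpt : forall n, 0 <= hs_dens (conv u v) n <= 2 * split_const ^ 2 *
    (zconv (fun m => Cmod (v m)) (sqrt_weighted u) n ^ 2 + zconv (fun m => Cmod (u m)) (sqrt_weighted v) n ^ 2))
    by (intros n; split; [apply hs_dens_nonneg| apply hs_dens_conv_le; auto]).
  destruct (zsummable_le _ _ Hpt) as [Hok Hle]; [apply zsummable_scal, zsummable_plus; auto|].
  split; auto.
  rewrite zsum_scal, zsum_plus in Hle by auto.
  pose proof (hs_norm_nonneg u). pose proof (hs_norm_nonneg v). pose proof conv_const_nonneg.
  assert (Hfin : zsum (hs_dens (conv u v)) <= (conv_const * hs_norm s u * hs_norm s v) ^ 2).
  { eapply Rle_trans; [exact Hle|].
    replace ((conv_const * hs_norm s u * hs_norm s v) ^ 2)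
      with (2 * split_const ^ 2 * (2 * (l1_const * hs_norm s u * hs_norm s v) ^ 2))
      by (unfold conv_const; ring).
    apply Rmult_le_compat_l; [pose proof (pow2_ge_0 split_const); lra|].
    replace (l1_const * hs_norm s v * hs_norm s u) with (l1_const * hs_norm s u * hs_norm s v) in Y2le by ring.
    lra. }
  assert (0 <= conv_const * hs_norm s u * hs_norm s v) by (apply Rmult_le_pos; [apply Rmult_le_pos|]; auto).
  rewrite (hs_norm_zsum (conv u v)), <- (sqrt_pow2 (conv_const * hs_norm s u * hs_norm s v)) by auto.
  apply sqrt_le_1_alt; auto.
Qed.

(** * The trilinear form behind F *)

Definition lc (x : R) (u : seqZ) (y : R) (v : seqZ) : seqZ := sadd (sscal x u) (sscal y v).

Lemma sadd_lc u v : sadd u v = lc 1 u 1 v.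
Proof.
  apply functional_extensionality; intros n. unfold lc, sadd, sscal.
  apply injective_projections; simpl; ring.
Qed.

Lemma H1_lc tau x u y v : H1 tau (lc x u y v) = lc x (H1 tau u) y (H1 tau v).
Proof.
  apply functional_extensionality; intros n. unfold lc, H1, sadd, sscal.
  apply injective_projections; simpl; ring.
Qed.

Lemma sconj_lc x u y v : sconj (lc x u y v) = lc x (sconj u) y (sconj v).
Proof.
  apply functional_extensionality; intros n. unfold lc, sconj, sadd, sscal.
  apply injective_projections; simpl; ring.
Qed.

Lemma conv_lc_l x u1 y u2 v : in_Hs s u1 -> in_Hs s u2 -> in_Hs s v ->
  conv (lc x u1 y u2) v = lc x (conv u1 v) y (conv u2 v).
Proof.
  intros H1 H2 Hv. apply functional_extensionality; intros n. unfold conv, lc, sadd, sscal.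
  rewrite (sumZ_ext _ (fun m => (RtoC x * (u1 m * v (n - m)%Z) + RtoC y * (u2 m * v (n - m)%Z))%C))
    by (intros m; apply injective_projections; simpl; ring).
  pose proof (fun a b n => csummable_conv_term a b n) as Hc.
  rewrite sumZ_plus, !sumZ_scal; auto using csummable_scal.
Qed.

Lemma conv_lc_r x v1 y v2 u : in_Hs s v1 -> in_Hs s v2 -> in_Hs s u ->
  conv u (lc x v1 y v2) = lc x (conv u v1) y (conv u v2).
Proof.
  intros H1 H2 Hu. apply functional_extensionality; intros n. unfold conv, lc, sadd, sscal.
  rewrite (sumZ_ext _ (fun m => (RtoC x * (u m * v1 (n - m)%Z) + RtoC y * (u m * v2 (n - m)%Z))%C))
    by (intros m; apply injective_projections; simpl; ring).
  pose proof (fun a b n => csummable_conv_term a b n) as Hc.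
  rewrite sumZ_plus, !sumZ_scal; auto using csummable_scal.
Qed.

Definition Ftri (tau : R) (a b c : seqZ) : seqZ :=
  H1 (- tau) (conv (conv (H1 tau a) (H1 tau b)) (sconj (H1 tau c))).

Lemma Fnl_Ftri tau w : Fnl tau w = Ftri tau w w w.
Proof. reflexivity. Qed.

Definition Ftri_const : R := conv_const * conv_const.

Lemma Ftri_const_nonneg : 0 <= Ftri_const.
Proof. apply Rmult_le_pos; apply conv_const_nonneg. Qed.

Lemma Hs_Ftri tau a b c : in_Hs s a -> in_Hs s b -> in_Hs s c ->
  in_Hs s (Ftri tau a b c) /\
  hs_norm s (Ftri tau a b c) <= Ftri_const * hs_norm s a * hs_norm s b * hs_norm s c.
Proof.
  intros Ha Hb Hc.
  destruct (Hs_H1 tau a Ha) as [Ha1 Ea]. destruct (Hs_H1 tau b Hb) as [Hb1 Eb].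
  destruct (Hs_H1 tau c Hc) as [Hc1 Ec]. destruct (Hs_sconj _ Hc1) as [Hc2 Ec2].
  destruct (Hs_conv _ _ Ha1 Hb1) as [Hab Nab]. destruct (Hs_conv _ _ Hab Hc2) as [Habc Nabc].
  destruct (Hs_H1 (- tau) _ Habc) as [Hr Er].
  unfold Ftri. split; auto. rewrite Er.
  eapply Rle_trans; [exact Nabc|]. rewrite Ec2, Ec. rewrite Ea, Eb in Nab.
  pose proof (hs_norm_nonneg c). pose proof conv_const_nonneg.
  unfold Ftri_const. apply Rmult_le_compat_r; auto.
  replace (conv_const * conv_const * hs_norm s a * hs_norm s b)
    with (conv_const * (conv_const * hs_norm s a * hs_norm s b)) by ring.
  apply Rmult_le_compat_l; auto.
Qed.

Lemma Ftri_lc1 tau x u y v b c : in_Hs s u -> in_Hs s v -> in_Hs s b -> in_Hs s c ->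
  Ftri tau (lc x u y v) b c = lc x (Ftri tau u b c) y (Ftri tau v b c).
Proof.
  intros Hu Hv Hb Hc. unfold Ftri.
  pose proof (proj1 (Hs_H1 tau _ Hu)). pose proof (proj1 (Hs_H1 tau _ Hv)).
  pose proof (proj1 (Hs_H1 tau _ Hb)). pose proof (proj1 (Hs_sconj _ (proj1 (Hs_H1 tau _ Hc)))).
  rewrite H1_lc, conv_lc_l, conv_lc_l, H1_lc; auto; apply Hs_conv; auto.
Qed.

Lemma Ftri_lc2 tau x u y v a c : in_Hs s u -> in_Hs s v -> in_Hs s a -> in_Hs s c ->
  Ftri tau a (lc x u y v) c = lc x (Ftri tau a u c) y (Ftri tau a v c).
Proof.
  intros Hu Hv Ha Hc. unfold Ftri.
  pose proof (proj1 (Hs_H1 tau _ Hu)). pose proof (proj1 (Hs_H1 tau _ Hv)).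
  pose proof (proj1 (Hs_H1 tau _ Ha)). pose proof (proj1 (Hs_sconj _ (proj1 (Hs_H1 tau _ Hc)))).
  rewrite H1_lc, conv_lc_r, conv_lc_l, H1_lc; auto; apply Hs_conv; auto.
Qed.

Lemma Ftri_lc3 tau x u y v a b : in_Hs s u -> in_Hs s v -> in_Hs s a -> in_Hs s b ->
  Ftri tau a b (lc x u y v) = lc x (Ftri tau a b u) y (Ftri tau a b v).
Proof.
  intros Hu Hv Ha Hb. unfold Ftri.
  pose proof (proj1 (Hs_sconj _ (proj1 (Hs_H1 tau _ Hu)))).
  pose proof (proj1 (Hs_sconj _ (proj1 (Hs_H1 tau _ Hv)))).
  pose proof (proj1 (Hs_H1 tau _ Ha)). pose proof (proj1 (Hs_H1 tau _ Hb)).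
  rewrite H1_lc, sconj_lc, conv_lc_r, H1_lc; auto; apply Hs_conv; auto.
Qed.

Lemma Ftri_add1 tau u v b c : in_Hs s u -> in_Hs s v -> in_Hs s b -> in_Hs s c ->
  Ftri tau (sadd u v) b c = sadd (Ftri tau u b c) (Ftri tau v b c).
Proof. intros. rewrite !sadd_lc, Ftri_lc1; auto. Qed.

Lemma Ftri_add2 tau u v a c : in_Hs s u -> in_Hs s v -> in_Hs s a -> in_Hs s c ->
  Ftri tau a (sadd u v) c = sadd (Ftri tau a u c) (Ftri tau a v c).
Proof. intros. rewrite !sadd_lc, Ftri_lc2; auto. Qed.

Lemma Ftri_add3 tau u v a b : in_Hs s u -> in_Hs s v -> in_Hs s a -> in_Hs s b ->
  Ftri tau a b (sadd u v) = sadd (Ftri tau a b u) (Ftri tau a b v).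
Proof. intros. rewrite !sadd_lc, Ftri_lc3; auto. Qed.

(** * Smoothness of F(tau, .) *)

Section Derivatives.
Variable tau : R.

Notation T := (Ftri tau).

Lemma in_Hs_Ftri a b c : in_Hs s a -> in_Hs s b -> in_Hs s c -> in_Hs s (T a b c).
Proof. intros; apply Hs_Ftri; auto. Qed.

Lemma Ftri_norm_le a b c : in_Hs s a -> in_Hs s b -> in_Hs s c ->
  hs_norm s (T a b c) <= Ftri_const * hs_norm s a * hs_norm s b * hs_norm s c.
Proof. intros; apply Hs_Ftri; auto. Qed.

Hint Resolve in_Hs_Ftri : core.

Definition sadd3 (x y z : seqZ) : seqZ := sadd (sadd x y) z.
Definition sadd4 (x y z t : seqZ) : seqZ := sadd (sadd3 x y z) t.
Definition sadd6 (x1 x2 x3 x4 x5 x6 : seqZ) : seqZ := sadd (sadd (sadd4 x1 x2 x3 x4) x5) x6.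

Lemma Hs_sadd3 x y z : in_Hs s x -> in_Hs s y -> in_Hs s z ->
  in_Hs s (sadd3 x y z) /\ hs_norm s (sadd3 x y z) <= 4 * (hs_norm s x + hs_norm s y + hs_norm s z).
Proof.
  intros. unfold sadd3. destruct (Hs_sadd x y) as [H2 H3]; auto.
  destruct (Hs_sadd (sadd x y) z) as [H4 H5]; auto. split; auto.
  pose proof (hs_norm_nonneg x). pose proof (hs_norm_nonneg y). pose proof (hs_norm_nonneg z). lra.
Qed.

Lemma Hs_sadd4 x y z t : in_Hs s x -> in_Hs s y -> in_Hs s z -> in_Hs s t ->
  in_Hs s (sadd4 x y z t) /\
  hs_norm s (sadd4 x y z t) <= 8 * (hs_norm s x + hs_norm s y + hs_norm s z + hs_norm s t).
Proof.
  intros. unfold sadd4. destruct (Hs_sadd3 x y z) as [H4 H5]; auto.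
  destruct (Hs_sadd (sadd3 x y z) t) as [H6 H7]; auto. split; auto.
  pose proof (hs_norm_nonneg x). pose proof (hs_norm_nonneg y).
  pose proof (hs_norm_nonneg z). pose proof (hs_norm_nonneg t). lra.
Qed.

Lemma Hs_sadd6 x1 x2 x3 x4 x5 x6 :
  in_Hs s x1 -> in_Hs s x2 -> in_Hs s x3 -> in_Hs s x4 -> in_Hs s x5 -> in_Hs s x6 ->
  in_Hs s (sadd6 x1 x2 x3 x4 x5 x6) /\ hs_norm s (sadd6 x1 x2 x3 x4 x5 x6) <=
   32 * (hs_norm s x1 + hs_norm s x2 + hs_norm s x3 + hs_norm s x4 + hs_norm s x5 + hs_norm s x6).
Proof.
  intros. unfold sadd6. destruct (Hs_sadd4 x1 x2 x3 x4) as [H7 H8]; auto.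
  destruct (Hs_sadd (sadd4 x1 x2 x3 x4) x5) as [H9 H10]; auto.
  destruct (Hs_sadd (sadd (sadd4 x1 x2 x3 x4) x5) x6) as [H11 H12]; auto.
  split; auto.
  pose proof (hs_norm_nonneg x1). pose proof (hs_norm_nonneg x2). pose proof (hs_norm_nonneg x3).
  pose proof (hs_norm_nonneg x4). pose proof (hs_norm_nonneg x5). pose proof (hs_norm_nonneg x6). lra.
Qed.

Definition Ftri_sym (a b c : seqZ) : seqZ :=
  sadd6 (T a b c) (T b a c) (T a c b) (T b c a) (T c a b) (T c b a).

Lemma Hs_Ftri_sym a b c : in_Hs s a -> in_Hs s b -> in_Hs s c ->
  in_Hs s (Ftri_sym a b c) /\
  hs_norm s (Ftri_sym a b c) <= 192 * Ftri_const * hs_norm s a * hs_norm s b * hs_norm s c.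
Proof.
  intros Ha Hb Hc. unfold Ftri_sym.
  edestruct Hs_sadd6 as [HS Hn]; [| | | | | | split; [exact HS| eapply Rle_trans; [apply Hn|]]]; auto.
  pose proof (Ftri_norm_le _ _ _ Ha Hb Hc) as P1. pose proof (Ftri_norm_le _ _ _ Hb Ha Hc) as P2.
  pose proof (Ftri_norm_le _ _ _ Ha Hc Hb) as P3. pose proof (Ftri_norm_le _ _ _ Hb Hc Ha) as P4.
  pose proof (Ftri_norm_le _ _ _ Hc Ha Hb) as P5. pose proof (Ftri_norm_le _ _ _ Hc Hb Ha) as P6.
  pose proof (hs_norm_nonneg a). pose proof (hs_norm_nonneg b). pose proof (hs_norm_nonneg c).
  pose proof Ftri_const_nonneg. nra.
Qed.

Definition Fnl_deriv (k : nat) (w : seqZ) (hh : nat -> seqZ) : seqZ :=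
  match k with
  | O => T w w w
  | 1%nat => let h0 := hh 0%nat in sadd3 (T h0 w w) (T w h0 w) (T w w h0)
  | 2%nat => Ftri_sym (hh 0%nat) (hh 1%nat) w
  | 3%nat => Ftri_sym (hh 0%nat) (hh 1%nat) (hh 2%nat)
  | _ => szero
  end.

Lemma in_Hs_Fnl_deriv k w hh : in_Hs s w -> (forall i, (i < k)%nat -> in_Hs s (hh i)) ->
  in_Hs s (Fnl_deriv k w hh).
Proof.
  intros Hw H. destruct k as [|[|[|[|k]]]]; simpl.
  - auto.
  - pose proof (H 0%nat ltac:(lia)). apply Hs_sadd3; auto.
  - apply Hs_Ftri_sym; auto.
  - apply Hs_Ftri_sym; auto.
  - apply Hs_zero.
Qed.

Lemma Fnl_deriv_ext k w hh hh' : (forall i, (i < k)%nat -> hh i = hh' i) ->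
  Fnl_deriv k w hh = Fnl_deriv k w hh'.
Proof.
  intros H. destruct k as [|[|[|[|k]]]]; cbn [Fnl_deriv]; auto.
  - rewrite (H 0%nat); auto.
  - rewrite (H 0%nat), (H 1%nat); auto.
  - rewrite (H 0%nat), (H 1%nat), (H 2%nat); auto.
Qed.

Ltac seq_ring := apply functional_extensionality; intros ?n;
  unfold Ftri_sym, sadd6, sadd4, sadd3, lc, sadd, ssub, sscal, szero; ring.

Lemma Fnl_deriv_linear k w : in_Hs s w -> forall hh i (a b : R) u v, (i < k)%nat ->
  (forall j, (j < k)%nat -> in_Hs s (hh j)) -> in_Hs s u -> in_Hs s v ->
  Fnl_deriv k w (upd hh i (sadd (sscal a u) (sscal b v)))
  = sadd (sscal a (Fnl_deriv k w (upd hh i u))) (sscal b (Fnl_deriv k w (upd hh i v))).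
Proof.
  intros Hw hh i a b u v Hi Hh Hu Hv.
  change (sadd (sscal a u) (sscal b v)) with (lc a u b v).
  destruct k as [|[|[|[|k]]]]; try lia.
  - assert (i = 0%nat) by lia. subst. cbn [Fnl_deriv upd Nat.eqb].
    rewrite ?Ftri_lc1, ?Ftri_lc2, ?Ftri_lc3 by assumption. seq_ring.
  - pose proof (Hh 0%nat ltac:(lia)). pose proof (Hh 1%nat ltac:(lia)).
    destruct i as [|[|i]]; try lia; cbn [Fnl_deriv upd Nat.eqb]; unfold Ftri_sym;
      rewrite ?Ftri_lc1, ?Ftri_lc2, ?Ftri_lc3 by assumption; seq_ring.
  - pose proof (Hh 0%nat ltac:(lia)). pose proof (Hh 1%nat ltac:(lia)). pose proof (Hh 2%nat ltac:(lia)).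
    destruct i as [|[|[|i]]]; try lia; cbn [Fnl_deriv upd Nat.eqb]; unfold Ftri_sym;
      rewrite ?Ftri_lc1, ?Ftri_lc2, ?Ftri_lc3 by assumption; seq_ring.
  - cbn [Fnl_deriv]. seq_ring.
Qed.

Lemma prod_norms_nonneg k hh : 0 <= prod_norms s k hh.
Proof.
  unfold prod_norms. generalize (seq 0 k). intros l; induction l; simpl; [lra|].
  apply Rmult_le_pos; auto; apply hs_norm_nonneg.
Qed.

Lemma Fnl_deriv_bounded k w : in_Hs s w -> exists M, forall hh,
  (forall i, (i < k)%nat -> in_Hs s (hh i)) -> hs_norm s (Fnl_deriv k w hh) <= M * prod_norms s k hh.
Proof.
  intros Hw. pose proof Ftri_const_nonneg as HC. set (nw := hs_norm s w).
  assert (Hnw : 0 <= nw) by apply hs_norm_nonneg.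
  destruct k as [|[|[|[|k]]]].
  - exists (Ftri_const * nw ^ 3). intros hh _. unfold prod_norms; simpl. cbn [Fnl_deriv].
    pose proof (Ftri_norm_le w w w Hw Hw Hw). fold nw in H. lra.
  - exists (12 * Ftri_const * nw ^ 2). intros hh Hh. unfold prod_norms; simpl. cbn [Fnl_deriv].
    pose proof (Hh 0%nat ltac:(lia)) as H0. set (n0 := hs_norm s (hh 0%nat)).
    assert (0 <= n0) by apply hs_norm_nonneg.
    destruct (Hs_sadd3 (T (hh 0%nat) w w) (T w (hh 0%nat) w) (T w w (hh 0%nat))) as [_ Hb]; auto.
    pose proof (Ftri_norm_le _ _ _ H0 Hw Hw). pose proof (Ftri_norm_le _ _ _ Hw H0 Hw).
    pose proof (Ftri_norm_le _ _ _ Hw Hw H0). fold nw n0 in H1, H2, H3.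
    eapply Rle_trans; [apply Hb| nra].
  - exists (192 * Ftri_const * nw). intros hh Hh. unfold prod_norms; simpl. cbn [Fnl_deriv].
    eapply Rle_trans; [apply Hs_Ftri_sym; auto|]. fold nw. right; ring.
  - exists (192 * Ftri_const). intros hh Hh. unfold prod_norms; simpl. cbn [Fnl_deriv].
    eapply Rle_trans; [apply Hs_Ftri_sym; auto|]. right; ring.
  - exists 0. intros hh _. cbn [Fnl_deriv]. rewrite (proj2 Hs_zero).
    pose proof (prod_norms_nonneg (S (S (S (S k)))) hh). lra.
Qed.

Ltac expand_Ftri := rewrite ?Ftri_add1, ?Ftri_add2, ?Ftri_add3 by assumption.

Lemma Fnl_deriv0_remainder w h hh : in_Hs s w -> in_Hs s h -> hs_norm s h <= 1 ->
  hs_norm s (ssub (Fnl_deriv 0 (sadd w h) hh)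
                  (sadd (Fnl_deriv 0 w hh) (Fnl_deriv 1 w (shift_in h hh))))
  <= 8 * Ftri_const * (3 * hs_norm s w + 1) * hs_norm s h ^ 2.
Proof.
  intros Hw Hh Hh1. pose proof Ftri_const_nonneg as HC.
  assert (Hwh : in_Hs s (sadd w h)) by (apply Hs_sadd; auto).
  cbn [Fnl_deriv shift_in].
  replace (ssub (T (sadd w h) (sadd w h) (sadd w h)) (sadd (T w w w) (sadd3 (T h w w) (T w h w) (T w w h))))
    with (sadd4 (T h h w) (T h w h) (T w h h) (T h h h)) by (expand_Ftri; seq_ring).
  set (nh := hs_norm s h) in *. set (nw := hs_norm s w).
  assert (0 <= nh) by apply hs_norm_nonneg. assert (0 <= nw) by apply hs_norm_nonneg.
  edestruct Hs_sadd4 as [_ Hb]; [| | | | eapply Rle_trans; [apply Hb|]]; auto.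
  pose proof (Ftri_norm_le h h w Hh Hh Hw) as P1. pose proof (Ftri_norm_le h w h Hh Hw Hh) as P2.
  pose proof (Ftri_norm_le w h h Hw Hh Hh) as P3. pose proof (Ftri_norm_le h h h Hh Hh Hh) as P4.
  fold nh nw in P1, P2, P3, P4.
  assert (0 <= Ftri_const * nh * nh) by (apply Rmult_le_pos; [apply Rmult_le_pos|]; auto).
  assert (Ftri_const * nh * nh * nh <= Ftri_const * nh * nh * 1) by (apply Rmult_le_compat_l; auto).
  nra.
Qed.

Lemma Fnl_deriv1_remainder w h hh : in_Hs s w -> in_Hs s h -> in_Hs s (hh 0%nat) ->
  hs_norm s (ssub (Fnl_deriv 1 (sadd w h) hh)
                  (sadd (Fnl_deriv 1 w hh) (Fnl_deriv 2 w (shift_in h hh))))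
  <= 12 * Ftri_const * hs_norm s (hh 0%nat) * hs_norm s h ^ 2.
Proof.
  intros Hw Hh H0. pose proof Ftri_const_nonneg as HC.
  assert (Hwh : in_Hs s (sadd w h)) by (apply Hs_sadd; auto).
  cbn [Fnl_deriv shift_in]. set (h0 := hh 0%nat) in *.
  replace (ssub (sadd3 (T h0 (sadd w h) (sadd w h)) (T (sadd w h) h0 (sadd w h)) (T (sadd w h) (sadd w h) h0))
             (sadd (sadd3 (T h0 w w) (T w h0 w) (T w w h0))
                (Ftri_sym h h0 w)))
    with (sadd3 (T h0 h h) (T h h0 h) (T h h h0)) by (unfold Ftri_sym, sadd3; expand_Ftri; seq_ring).
  set (nh := hs_norm s h). set (n0 := hs_norm s h0).
  assert (0 <= nh) by apply hs_norm_nonneg. assert (0 <= n0) by apply hs_norm_nonneg.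
  edestruct Hs_sadd3 as [_ Hb]; [| | | eapply Rle_trans; [apply Hb|]]; auto.
  pose proof (Ftri_norm_le _ _ _ H0 Hh Hh) as P1. pose proof (Ftri_norm_le _ _ _ Hh H0 Hh) as P2.
  pose proof (Ftri_norm_le _ _ _ Hh Hh H0) as P3. fold nh n0 in P1, P2, P3.
  nra.
Qed.

Lemma Fnl_deriv_remainder_zero k w h hh : (2 <= k)%nat -> in_Hs s w -> in_Hs s h ->
  (forall i, (i < k)%nat -> in_Hs s (hh i)) ->
  ssub (Fnl_deriv k (sadd w h) hh) (sadd (Fnl_deriv k w hh) (Fnl_deriv (S k) w (shift_in h hh))) = szero.
Proof.
  intros Hk Hw Hh Hhh. destruct k as [|[|[|k]]]; try lia.
  - pose proof (Hhh 0%nat ltac:(lia)). pose proof (Hhh 1%nat ltac:(lia)).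
    assert (Hwh : in_Hs s (sadd w h)) by (apply Hs_sadd; auto).
    cbn [Fnl_deriv shift_in]. unfold Ftri_sym, sadd6, sadd4, sadd3. expand_Ftri. seq_ring.
  - destruct k as [|k]; cbn [Fnl_deriv shift_in]; seq_ring.
Qed.

Lemma Fnl_deriv_remainder k w : in_Hs s w -> forall eps, 0 < eps -> exists delta, 0 < delta /\
  forall h, in_Hs s h -> hs_norm s h < delta ->
  forall hh, (forall i, (i < k)%nat -> in_Hs s (hh i) /\ hs_norm s (hh i) <= 1) ->
  hs_norm s (ssub (Fnl_deriv k (sadd w h) hh)
                  (sadd (Fnl_deriv k w hh) (Fnl_deriv (S k) w (shift_in h hh))))
  <= eps * hs_norm s h.
Proof.
  intros Hw eps Heps. pose proof Ftri_const_nonneg as HC.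
  pose proof (hs_norm_nonneg w) as Hnw.
  set (C := match k with
            | O => 8 * Ftri_const * (3 * hs_norm s w + 1)
            | 1%nat => 12 * Ftri_const
            | _ => 0 end).
  assert (HC0 : 0 <= C) by (unfold C; destruct k as [|[|k]]; nra).
  destruct (quadratic_le_linear C eps HC0 Heps) as [delta [Hdelta Hsmall]].
  exists delta. split; auto. intros h Hh Hhd hh Hhh.
  destruct (Hsmall (hs_norm s h)) as [Hh1 Hquad]; [split; auto; apply hs_norm_nonneg|].
  eapply Rle_trans; [|exact Hquad]. unfold C.
  pose proof (pow2_ge_0 (hs_norm s h)).
  destruct k as [|[|k]].
  - apply Fnl_deriv0_remainder; auto.
  - destruct (Hhh 0%nat ltac:(lia)) as [H0 N0].
    eapply Rle_trans; [apply Fnl_deriv1_remainder; auto|].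
    pose proof (hs_norm_nonneg (hh 0%nat)).
    apply Rmult_le_compat_r; [auto|]. rewrite <- (Rmult_1_r (12 * Ftri_const)) at 2.
    apply Rmult_le_compat_l; lra.
  - rewrite Fnl_deriv_remainder_zero by (auto; try lia; intros; apply Hhh; auto).
    rewrite (proj2 Hs_zero). lra.
Qed.

Lemma smooth_Fnl : smooth_Hs s (Fnl tau).
Proof.
  exists Fnl_deriv. split; [|split].
  - intros w hh _. reflexivity.
  - intros k w Hw. split; [|split; [|split]].
    + intros hh Hh. apply in_Hs_Fnl_deriv; auto.
    + intros hh hh' Hh. apply Fnl_deriv_ext; auto.
    + intros hh i a b u v Hi Hh Hu Hv. apply Fnl_deriv_linear; auto.
    + apply Fnl_deriv_bounded; auto.
  - intros k w Hw eps Heps. apply Fnl_deriv_remainder; auto.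
Qed.

End Derivatives.

(** * The time average of F *)

Section Average.
Variable w : seqZ.
Hypothesis Hw : in_Hs s w.
Variable n : Z.

(* [F(t, w)_n] is the double sum over [k = n1 + n2] and [a = n1] of these terms. *)
Definition coef (k a : Z) : C := (w a * w (k - a)%Z * Cconj (w (k - n)%Z))%C.
Definition phase (k a : Z) : Z := (n ^ 3 - a ^ 3 - (k - a) ^ 3 + (k - n) ^ 3)%Z.
Definition phase_term (t : R) (k a : Z) : C := (cis (IZR (phase k a) * t) * coef k a)%C.
Definition resonant (k a : Z) : C := if Z.eqb (phase k a) 0 then coef k a else 0%C.

Lemma Fnl_double_sum t : Fnl t w n = sumZ (fun k => sumZ (fun a => phase_term t k a)).
Proof.
  set (u := H1 t w).
  destruct (Hs_H1 t w Hw) as [Hu _]. fold u in Hu.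
  destruct (Hs_sconj u Hu) as [Hsu _]. destruct (Hs_conv u u Hu Hu) as [Huu _].
  change (Fnl t w n) with (H1 (- t) (conv (conv u u) (sconj u)) n).
  rewrite H1_opp_cis. unfold conv at 1.
  rewrite <- sumZ_scal by (apply csummable_conv_term; auto).
  apply sumZ_ext. intros k. unfold conv.
  rewrite <- sumZ_scal_r by (apply csummable_conv_term; auto).
  rewrite <- sumZ_scal by (apply csummable_scal_r, csummable_conv_term; auto).
  apply sumZ_ext. intros a. unfold sconj, u, phase_term, coef, phase.
  rewrite !H1_cis, Cconj_cis_mult.
  replace (- (n - k))%Z with (k - n)%Z by ring.
  transitivity ((cis (IZR (n ^ 3) * t) * cis (- (IZR (a ^ 3) * t)) * cis (- (IZR ((k - a) ^ 3) * t))
                 * cis (- - (IZR ((k - n) ^ 3) * t))) * (w a * w (k - a)%Z * Cconj (w (k - n)%Z)))%C;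
    [ring|].
  rewrite !cis_mult. do 2 f_equal. rewrite !plus_IZR, !minus_IZR. ring.
Qed.

Lemma is_RInt_phase_term k a :
  is_RInt (fun t => Re (phase_term t k a)) 0 (2 * PI) (Re (RtoC (2 * PI) * resonant k a)) /\
  is_RInt (fun t => Im (phase_term t k a)) 0 (2 * PI) (Im (RtoC (2 * PI) * resonant k a)).
Proof.
  pose proof (is_RInt_cos_mult (phase k a)) as Hc. pose proof (is_RInt_sin_mult (phase k a)) as Hs.
  unfold phase_term, resonant. generalize (coef k a) as c. intros [x y]. split.
  - replace (Re (RtoC (2 * PI) * (if (phase k a =? 0)%Z then (x, y) else 0%C)))
      with (x * (if (phase k a =? 0)%Z then 2 * PI else 0) + - y * 0)
      by (destruct (phase k a =? 0)%Z; unfold Re; simpl; ring).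
    eapply is_RInt_ext; [| apply (is_RInt_lincomb _ _ _ _ _ _ _ _ Hc Hs)].
    intros t _. unfold cis, Re. simpl. ring.
  - replace (Im (RtoC (2 * PI) * (if (phase k a =? 0)%Z then (x, y) else 0%C)))
      with (y * (if (phase k a =? 0)%Z then 2 * PI else 0) + x * 0)
      by (destruct (phase k a =? 0)%Z; unfold Im; simpl; ring).
    eapply is_RInt_ext; [| apply (is_RInt_lincomb _ _ _ _ _ _ _ _ Hc Hs)].
    intros t _. unfold cis, Im. simpl. ring.
Qed.

Lemma Cmod_phase_term t k a : Cmod (phase_term t k a) = Cmod (coef k a).
Proof. unfold phase_term. rewrite Cmod_mult, Cmod_cis. ring. Qed.

Lemma Cmod_resonant_le k a : Cmod (resonant k a) <= Cmod (coef k a).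
Proof. unfold resonant. destruct (phase k a =? 0)%Z; [lra| rewrite Cmod_0; apply Cmod_ge_0]. Qed.

Lemma Cmod_coef_le k a : Cmod (coef k a) <= (hs_norm s w * Cmod (w (k - n)%Z)) * Cmod (w a).
Proof.
  unfold coef. rewrite !Cmod_mult, Cmod_conj.
  pose proof (Cmod_le_hs_norm w (k - a)%Z Hw).
  pose proof (Cmod_ge_0 (w a)). pose proof (Cmod_ge_0 (w (k - a)%Z)). pose proof (Cmod_ge_0 (w (k - n)%Z)).
  assert (Cmod (w a) * Cmod (w (k - a)%Z) <= Cmod (w a) * hs_norm s w) by (apply Rmult_le_compat_l; auto).
  nra.
Qed.

Lemma zsummable_Cmod_coef k : zsummable (fun a => Cmod (coef k a)).
Proof.
  exact (proj1 (zsummable_le _ _ (fun a => conj (Cmod_ge_0 _) (Cmod_coef_le k a))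
                  (zsummable_scal _ _ (proj1 (Hs_l1 w Hw))))).
Qed.

Lemma csummable_resonant k : csummable (resonant k).
Proof. apply csummable_dom with (fun a => Cmod (coef k a)); [apply Cmod_resonant_le| apply zsummable_Cmod_coef]. Qed.

Definition coef_row_bound (k : Z) : R := zsum (fun a => Cmod (coef k a)).

Lemma zsummable_coef_row_bound : zsummable coef_row_bound.
Proof.
  destruct (Hs_l1 w Hw) as [Hl1 _].
  assert (Hshift : zsummable (fun k => Cmod (w (k - n)%Z))).
  { apply (proj1 (zsummable_reindex (fun x => Cmod (w x)) (fun k => (k - n)%Z)
                    (fun x => Cmod_ge_0 _) Hl1 ltac:(intros x y E; cbv beta in E; lia))). }
  assert (Hle : forall k, 0 <= coef_row_bound k
                  <= (hs_norm s w * zsum (fun a => Cmod (w a))) * Cmod (w (k - n)%Z)).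
  { intros k. split; [apply zsum_nonneg; [intros; apply Cmod_ge_0| apply zsummable_Cmod_coef]|].
    apply Rle_trans with (zsum (fun a => (hs_norm s w * Cmod (w (k - n)%Z)) * Cmod (w a))).
    - apply zsum_le; [apply zsummable_Cmod_coef| apply zsummable_scal; auto| apply Cmod_coef_le].
    - rewrite zsum_scal. lra. }
  exact (proj1 (zsummable_le _ _ Hle (zsummable_scal _ _ Hshift))).
Qed.

Definition resonant_row (k : Z) : C := sumZ (resonant k).

Lemma Cmod_resonant_row_le k : Cmod (resonant_row k) <= coef_row_bound k.
Proof.
  eapply Rle_trans; [apply Cmod_sumZ, csummable_resonant|].
  apply zsum_le; [apply csummable_resonant| apply zsummable_Cmod_coef| apply Cmod_resonant_le].
Qed.

Lemma csummable_resonant_row : csummable resonant_row.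
Proof. exact (csummable_dom _ _ Cmod_resonant_row_le zsummable_coef_row_bound). Qed.

Lemma is_RInt_Fnl_coef :
  is_RInt (fun t => Re (Fnl t w n)) 0 (2 * PI) (Re (RtoC (2 * PI) * sumZ resonant_row)) /\
  is_RInt (fun t => Im (Fnl t w n)) 0 (2 * PI) (Im (RtoC (2 * PI) * sumZ resonant_row)).
Proof.
  set (J k := sumZ (fun a => RtoC (2 * PI) * resonant k a)%C).
  assert (EJ : forall k, J k = (RtoC (2 * PI) * resonant_row k)%C)
    by (intros k; apply sumZ_scal, csummable_resonant).
  assert (Hinner : forall k,
    is_RInt (fun t => Re (sumZ (phase_term t k))) 0 (2 * PI) (Re (J k)) /\
    is_RInt (fun t => Im (sumZ (phase_term t k))) 0 (2 * PI) (Im (J k))).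
  { intros k. apply (is_RInt_sumZ _ _ (fun a => RtoC (2 * PI) * resonant k a)%C (fun a => Cmod (coef k a))).
    - intros a. exact (proj1 (is_RInt_phase_term k a)).
    - intros a. exact (proj2 (is_RInt_phase_term k a)).
    - intros t a. rewrite Cmod_phase_term. lra.
    - apply zsummable_Cmod_coef.
    - apply csummable_scal, csummable_resonant. }
  assert (Hbound : forall t k, Cmod (sumZ (phase_term t k)) <= coef_row_bound k).
  { intros t k. eapply Rle_trans.
    - apply Cmod_sumZ, csummable_dom with (fun a => Cmod (coef k a)); [|apply zsummable_Cmod_coef].
      intros; rewrite Cmod_phase_term; lra.
    - right. apply zsum_ext. intros; apply Cmod_phase_term. }
  assert (HJ : csummable J)
    by (apply csummable_ext with (fun k => RtoC (2 * PI) * resonant_row k)%C; auto using csummable_scal, csummable_resonant_row).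
  destruct (is_RInt_sumZ _ _ J coef_row_bound (fun k => proj1 (Hinner k)) (fun k => proj2 (Hinner k))
              Hbound zsummable_coef_row_bound HJ) as [HR HI].
  rewrite (sumZ_ext J _ EJ), sumZ_scal in HR, HI by apply csummable_resonant_row.
  split; eapply is_RInt_ext; eauto; intros t _; rewrite Fnl_double_sum; auto.
Qed.

Lemma phase_factor k a : phase k a = (3 * k * (a - n) * (k - a - n))%Z.
Proof. unfold phase. ring. Qed.

Lemma phase_eq0 k a : phase k a = 0%Z <-> (k = 0 \/ a = n \/ a = k - n)%Z.
Proof.
  rewrite phase_factor. split.
  - intros H. repeat (apply Z.mul_eq_0 in H; destruct H as [H|H]); lia.
  - intros [H|[H|H]]; subst; ring.
Qed.

Lemma resonant_nonres k a : (k <> 0)%Z -> a <> n -> a <> (k - n)%Z -> resonant k a = 0%C.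
Proof.
  intros Hk H1 H2. unfold resonant. destruct (Z.eqb_spec (phase k a) 0) as [E|E]; auto.
  apply phase_eq0 in E. lia.
Qed.

Lemma resonant_res k a : (k = 0 \/ a = n \/ a = k - n)%Z -> resonant k a = coef k a.
Proof. intros H. unfold resonant. apply phase_eq0 in H. rewrite H. auto. Qed.

Lemma resonant_row_0 : resonant_row 0%Z = (bracket w w * Cconj (w (- n)%Z))%C.
Proof.
  assert (Hbr : csummable (fun a => (w a * w (- a)%Z)%C)).
  { apply csummable_ext with (fun m => (w m * w (0 - m)%Z)%C); [intros m; do 3 f_equal; lia|].
    apply csummable_conv_term; auto. }
  unfold resonant_row, bracket. rewrite <- sumZ_scal_r by apply Hbr.
  apply sumZ_ext. intros a. rewrite resonant_res by auto. unfold coef.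
  replace (0 - a)%Z with (- a)%Z by lia. replace (0 - n)%Z with (- n)%Z by lia. auto.
Qed.

Lemma resonant_row_diag : n <> 0%Z -> resonant_row (2 * n)%Z = (w n * w n * Cconj (w n))%C.
Proof.
  intros Hn. unfold resonant_row.
  destruct (sumZ_single (resonant (2 * n)%Z) n) as [_ ->].
  - intros y Hy. apply resonant_nonres; lia.
  - rewrite resonant_res by lia. unfold coef. replace (2 * n - n)%Z with n by lia. auto.
Qed.

(* Away from [k = 0] and [k = 2n] only [a = n] and [a = k - n] resonate. *)
Definition generic_row (k : Z) : C := (RtoC 2 * w n * RtoC (Cmod (w (k - n)%Z) ^ 2))%C.

Lemma resonant_row_generic k : k <> 0%Z -> k <> (2 * n)%Z -> resonant_row k = generic_row k.
Proof.
  intros Hk Hk2. unfold resonant_row, generic_row.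
  destruct (sumZ_pair (resonant k) n (k - n)%Z) as [_ ->].
  - lia.
  - intros y H1 H2. apply resonant_nonres; lia.
  - rewrite !resonant_res by lia. unfold coef. replace (k - (k - n))%Z with n by lia.
    rewrite Cmod2_conj. ring.
Qed.

Lemma zsummable_Cmod_sq : zsummable (fun k => Cmod (w k) ^ 2).
Proof.
  assert (H : forall k, 0 <= Cmod (w k) ^ 2 <= hs_dens w k).
  { intros k. unfold hs_dens. pose proof (weight_ge1 k). pose proof (pow2_ge_0 (Cmod (w k))). split; nra. }
  exact (proj1 (zsummable_le _ _ H Hw)).
Qed.

Lemma h_norm_sq : h_norm w ^ 2 = zsum (fun k => Cmod (w k) ^ 2).
Proof.
  change (h_norm w) with (sqrt (zsum (fun k => weight 0 k * Cmod (w k) ^ 2))).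
  rewrite (zsum_ext _ (fun k => Cmod (w k) ^ 2))
    by (intros k; unfold weight, Rpower; rewrite Rmult_0_l, exp_0; ring).
  rewrite pow2_sqrt; auto. apply zsum_nonneg; [intros; apply pow2_ge_0| apply zsummable_Cmod_sq].
Qed.

Lemma sumZ_generic_row : csummable generic_row /\
  sumZ generic_row = (RtoC 2 * w n * RtoC (h_norm w ^ 2))%C.
Proof.
  destruct (zsum_reindex_bij (fun k => Cmod (w k) ^ 2) (fun k => (k - n)%Z) (fun k => (k + n)%Z))
    as [Hsh Esh]; auto using zsummable_Cmod_sq; try (intros; lia); [intros; apply pow2_ge_0|].
  assert (Hreal : csummable (fun k => RtoC (Cmod (w (k - n)%Z) ^ 2))).
  { apply csummable_RtoC. apply zsummable_ext with (fun k => Cmod (w (k - n)%Z) ^ 2); auto.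
    intros; rewrite Rabs_pos_eq; auto. apply pow2_ge_0. }
  unfold generic_row. split; [apply csummable_scal; auto|].
  rewrite sumZ_scal, sumZ_RtoC, h_norm_sq; auto. cbv beta in Esh. rewrite Esh. auto.
Qed.

Lemma sumZ_resonant_row : sumZ resonant_row = Nav w n.
Proof.
  destruct sumZ_generic_row as [Hg Eg].
  set (excess k := (resonant_row k - generic_row k)%C).
  assert (Hex : csummable excess).
  { apply csummable_ext with (fun k => (resonant_row k + RtoC (-1) * generic_row k)%C);
      [intros; unfold excess; ring|].
    apply csummable_plus; [apply csummable_resonant_row| apply csummable_scal; auto]. }
  assert (Hex0 : forall k, k <> 0%Z -> k <> (2 * n)%Z -> excess k = 0%C)
    by (intros k H1 H2; unfold excess; rewrite resonant_row_generic by auto; ring).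
  rewrite (sumZ_ext resonant_row (fun k => (generic_row k + excess k)%C)) by (intros; unfold excess; ring).
  rewrite sumZ_plus, Eg by auto.
  unfold Nav, sconj. destruct (Z.eqb_spec n 0) as [Hn|Hn].
  - destruct (sumZ_single excess 0%Z) as [_ ->]; [intros y Hy; apply Hex0; lia|].
    unfold excess, generic_row. rewrite resonant_row_0, Hn.
    replace (- 0)%Z with 0%Z by lia. replace (0 - 0)%Z with 0%Z by lia.
    rewrite Cmod2_conj. ring.
  - destruct (sumZ_pair excess 0%Z (2 * n)%Z) as [_ ->]; [lia| intros y H1 H2; apply Hex0; lia|].
    unfold excess, generic_row. rewrite resonant_row_0, resonant_row_diag by auto.
    replace (0 - n)%Z with (- n)%Z by lia. replace (2 * n - n)%Z with n by lia.
    rewrite !RtoC_plus, !RtoC_mult, !Cmod2_conj. ring.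
Qed.

End Average.
End Sobolev.

Lemma Nav_Nav' w n : Nav w n = Nav' w n.
Proof.
  unfold Nav, Nav', sconj. destruct (Z.eqb_spec n 0) as [->|Hn].
  - replace (- 0)%Z with 0%Z by lia. rewrite !RtoC_minus. ring.
  - rewrite !RtoC_minus, !RtoC_plus, !RtoC_mult. ring.
Qed.

Theorem lemma2p2 (s : R) (hs : 1/2 < s) :
  (* for each fixed tau, w |-> F(tau,w) maps H^s into H^s and is smooth *)
  (forall tau w, in_Hs s w -> in_Hs s (Fnl tau w)) /\
  (forall tau, smooth_Hs s (Fnl tau)) /\
  (* cubic bound, uniform in tau *)
  (exists Cs, forall tau w, in_Hs s w ->
     hs_norm s (Fnl tau w) <= Cs * hs_norm s w ^ 3) /\
  (* 2 pi-periodicity in tau *)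
  (forall tau w, in_Hs s w -> Fnl (tau + 2 * PI) w = Fnl tau w) /\
  (* the time average (taken coefficientwise) is N(w), in both forms *)
  (forall w, in_Hs s w -> forall n : Z,
     ex_RInt (fun tau => Re (Fnl tau w n)) 0 (2 * PI) /\
     ex_RInt (fun tau => Im (Fnl tau w n)) 0 (2 * PI) /\
     (/ (2 * PI) * RInt (fun tau => Re (Fnl tau w n)) 0 (2 * PI),
      / (2 * PI) * RInt (fun tau => Im (Fnl tau w n)) 0 (2 * PI)) = Nav w n /\
     Nav w n = Nav' w n).
Proof.
  split; [|split; [|split; [|split]]].
  - intros tau w Hw. rewrite Fnl_Ftri. apply (Hs_Ftri s hs); auto.
  - intros tau. apply (smooth_Fnl s hs tau).
  - exists (Ftri_const s). intros tau w Hw. rewrite Fnl_Ftri.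
    eapply Rle_trans; [apply (Hs_Ftri s hs); auto| right; ring].
  - intros tau w _. apply Fnl_period.
  - intros w Hw n.
    destruct (is_RInt_Fnl_coef s hs w Hw n) as [HR HI].
    rewrite (sumZ_resonant_row s hs w Hw n) in HR, HI.
    split; [eexists; exact HR|]. split; [eexists; exact HI|].
    split; [| apply Nav_Nav'].
    rewrite (is_RInt_unique _ _ _ _ HR), (is_RInt_unique _ _ _ _ HI).
    pose proof PI_RGT_0. apply injective_projections; simpl; field; lra.
Qed.
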